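(* Let $\Xi$ be an orthogonal constructor rewrite system (with call-by-value rewriting) over a finite signature with constructors $\mathbf{c}_1,\dots,\mathbf{c}_g$ and function symbols $\mathbf{f}_1,\dots,\mathbf{f}_h$. Then there are $\lambda$-terms $F_{\mathbf{f}}$, one for each function symbol $\mathbf{f}$, and a natural number $k$ such that for every function symbol $\mathbf{f}$ of arity $a$ and all constructor terms $t_1,\dots,t_a$, writing $u=\mathbf{f}(t_1,\dots,t_a)$ and $M=F_{\mathbf{f}}\lceil t_1\rceil\cdots\lceil t_a\rceil$: (i) if $u$ rewrites to a constructor term $v$ in $n$ steps, then $M\rightarrow_v^{j}\lceil v\rceil$ for some $j\le kn$; (ii) if $u$ rewrites to a normal form $v$ that is not a constructor term, then $M\rightarrow_v^*\bot$; (iii) if $u$ diverges (admits an infinite rewrite sequence), then $M$ diverges (admits an infinite $\rightarrow_v$-sequence).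
   Context: A constructor rewrite system consists of a signature whose symbols are constructors or function symbols (each with an arity), and rules $\mathbf{f}(p_1,\dots,p_n)\rightarrow t$ where $\mathbf{f}$ is a function symbol, the patterns $p_i$ are built from constructors and variables, and $t$ is a term built from constructors, function symbols and variables. Orthogonal means no two distinct rules overlap and every variable occurs at most once in each left-hand side. Constructor terms are closed terms built only from constructors. Rewriting is call-by-value: a step replaces, anywhere in a term, an instance $l\sigma$ of a left-hand side by $r\sigma$, where $\sigma$ maps variables to constructor terms. A normal form is a term to which no step applies. $\lambda$-terms are $M::=x\mid\lambda x.M\mid MN$; values are $V::=x\mid\lambda x.M$. Weak call-by-value reduction $\rightarrow_v$ is the smallest relation with $(\lambda x.M)V\rightarrow_v M\{V/x\}$ for values $V$ and closed under $M\rightarrow_v N\Rightarrow ML\rightarrow_v NL$ and $LM\rightarrow_v LN$ (no reduction under $\lambda$). Scott encoding of constructor terms: $\lceil \mathbf{c}_i(t_1,\dots,t_n)\rceil=\lambda x_1.\cdots\lambda x_g.\lambda y.\,x_i\lceil t_1\rceil\cdots\lceil t_n\rceil$. The error term is $\bot=\lambda x_1.\cdots\lambda x_g.\lambda y.\,y$. *)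

From Stdlib Require Import List Arith.
Import ListNotations.

Inductive iter {A : Type} (R : A -> A -> Prop) : nat -> A -> A -> Prop :=
| iter0 x : iter R 0 x x
| iterS n x y z : R x y -> iter R n y z -> iter R (S n) x z.

Definition star {A : Type} (R : A -> A -> Prop) (x y : A) : Prop :=
  exists n, iter R n x y.

Definition diverges {A : Type} (R : A -> A -> Prop) (x : A) : Prop :=
  exists s : nat -> A, s 0 = x /\ forall n, R (s n) (s (S n)).

(* Constructors c_1..c_g are indexed 0..g-1 (Con i), function symbols
   f_1..f_h are indexed 0..h-1 (Fun i); arities are given by car / far. *)
Inductive term : Type :=
| Var : nat -> term
| Con : nat -> list term -> term
| Fun : nat -> list term -> term.

Fixpoint tsubst (s : nat -> term) (t : term) : term :=
  match t with
  | Var x => s x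
  | Con i ts => Con i (map (tsubst s) ts)
  | Fun i ts => Fun i (map (tsubst s) ts)
  end.

Fixpoint vars (t : term) : list nat :=
  match t with
  | Var x => [x]
  | Con _ ts => flat_map vars ts
  | Fun _ ts => flat_map vars ts
  end.

Fixpoint is_cterm (g : nat) (car : nat -> nat) (t : term) : Prop :=
  match t with
  | Var _ => False
  | Con i ts => i < g /\ length ts = car i /\ Forall (fun x => x) (map (is_cterm g car) ts)
  | Fun _ _ => False
  end.

Fixpoint is_pattern (g : nat) (car : nat -> nat) (t : term) : Prop :=
  match t with
  | Var _ => True
  | Con i ts => i < g /\ length ts = car i /\ Forall (fun x => x) (map (is_pattern g car) ts)
  | Fun _ _ => False
  end.

Fixpoint is_term (g h : nat) (car far : nat -> nat) (t : term) : Prop :=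
  match t with
  | Var _ => True
  | Con i ts => i < g /\ length ts = car i /\ Forall (fun x => x) (map (is_term g h car far) ts)
  | Fun i ts => i < h /\ length ts = far i /\ Forall (fun x => x) (map (is_term g h car far) ts)
  end.

Record rule : Type := mkRule { rfun : nat; rpats : list term; rrhs : term }.

Definition rlhs (r : rule) : term := Fun (rfun r) (rpats r).

Definition wf_rule (g h : nat) (car far : nat -> nat) (r : rule) : Prop :=
  rfun r < h /\ length (rpats r) = far (rfun r) /\
  Forall (is_pattern g car) (rpats r) /\
  is_term g h car far (rrhs r) /\
  incl (vars (rrhs r)) (vars (rlhs r)).

Definition left_linear (r : rule) : Prop := NoDup (vars (rlhs r)).

Definition overlap (r1 r2 : rule) : Prop :=
  exists s1 s2 : nat -> term, tsubst s1 (rlhs r1) = tsubst s2 (rlhs r2).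

Definition orthogonal_crs (g h : nat) (car far : nat -> nat) (R : list rule) : Prop :=
  Forall (wf_rule g h car far) R /\
  Forall left_linear R /\
  (forall i j d, i < length R -> j < length R -> i <> j ->
     ~ overlap (nth i R d) (nth j R d)).

(* call-by-value rewriting: redexes instantiated by constructor terms *)
Inductive rstep (g : nat) (car : nat -> nat) (R : list rule) : term -> term -> Prop :=
| rstep_root r s : In r R -> (forall x, is_cterm g car (s x)) ->
    rstep g car R (tsubst s (rlhs r)) (tsubst s (rrhs r))
| rstep_con i l1 l2 t t' : rstep g car R t t' ->
    rstep g car R (Con i (l1 ++ t :: l2)) (Con i (l1 ++ t' :: l2))
| rstep_fun i l1 l2 t t' : rstep g car R t t' ->
    rstep g car R (Fun i (l1 ++ t :: l2)) (Fun i (l1 ++ t' :: l2)).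

Definition rnormal (g : nat) (car : nat -> nat) (R : list rule) (t : term) : Prop :=
  forall t', ~ rstep g car R t t'.

Inductive lterm : Type :=
| LVar : nat -> lterm
| Lam : lterm -> lterm
| App : lterm -> lterm -> lterm.

Definition is_value (M : lterm) : Prop :=
  match M with LVar _ => True | Lam _ => True | App _ _ => False end.

Fixpoint lift (k : nat) (M : lterm) : lterm :=
  match M with
  | LVar n => if n <? k then LVar n else LVar (S n)
  | Lam M => Lam (lift (S k) M)
  | App M N => App (lift k M) (lift k N)
  end.

Fixpoint substk (k : nat) (N : lterm) (M : lterm) : lterm :=
  match M with
  | LVar n => if n <? k then LVar n else if n =? k then N else LVar (pred n)
  | Lam M => Lam (substk (S k) (lift 0 N) M)
  | App M1 M2 => App (substk k N M1) (substk k N M2)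
  end.

(* M{V/x} where x is the variable bound by the outermost lambda of \x.M *)
Definition lsubst (V M : lterm) : lterm := substk 0 V M.

Inductive bv : lterm -> lterm -> Prop :=
| bv_beta M V : is_value V -> bv (App (Lam M) V) (lsubst V M)
| bv_appl M N L : bv M N -> bv (App M L) (App N L)
| bv_appr L M N : bv M N -> bv (App L M) (App L N).

Fixpoint lams (n : nat) (M : lterm) : lterm :=
  match n with 0 => M | S n => Lam (lams n M) end.

Definition apps (M : lterm) (Ns : list lterm) : lterm := fold_left App Ns M.

(* Scott encoding: [c_i(t_1..t_n)] = \x_1...\x_g.\y. x_i [t_1] ... [t_n].
   With 0-based constructor index i, x_{i+1} has de Bruijn index g - i. *)
Fixpoint scott (g : nat) (t : term) : lterm :=
  match t with
  | Con i ts => lams (S g) (apps (LVar (g - i)) (map (scott g) ts))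
  | _ => LVar 0 (* irrelevant: only used on constructor terms *)
  end.

Definition lbot (g : nat) : lterm := lams (S g) (LVar 0).

(* F_f forces its arguments (an argument equal to bot makes the result bot),
   tries the rules of f in turn, matching patterns by nested Scott case analyses, and on
   success runs the compiled right-hand side; recursion works by passing every function
   code the codes of all function symbols.  Orthogonality makes one-step rewriting
   satisfy the diamond property, so a term has at most one normal form, every reduction
   to it has the same length, and innermost evaluation finds it.  Following innermost
   evaluation, each rewrite step and each constructor of a right-hand side costs a bounded
   number of beta-steps, which gives the linear bound; a term without normal form is
   compiled to code that keeps reaching, after at least one step, the compiled code of
   another term without normal form, so it diverges. *)

From Stdlib Require Import List Arith Lia Classical ClassicalEpsilon.
Import ListNotations.

Lemma Forall_id_map {A} (P : A -> Prop) l : Forall (fun x => x) (map P l) <-> Forall P l.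
Proof. rewrite Forall_map. tauto. Qed.

Lemma map_eq_In {A B} (f1 f2 : A -> B) a : forall l, In a l -> map f1 l = map f2 l -> f1 a = f2 a.
Proof. induction l; simpl; [tauto|]. intros [->|Hi] Hm; injection Hm; auto. Qed.

Lemma list_split_eq {A} : forall (l1 l2 m1 m2 : list A) a b, l1 ++ a :: l2 = m1 ++ b :: m2 ->
  (l1 = m1 /\ a = b /\ l2 = m2) \/ (exists k, m1 = l1 ++ a :: k /\ l2 = k ++ b :: m2) \/
  (exists k, l1 = m1 ++ b :: k /\ m2 = k ++ a :: l2).
Proof.
  induction l1; destruct m1; simpl; intros.
  - injection H; auto.
  - injection H as E1 E2; subst. right; left. exists m1; auto.
  - injection H as E1 E2; subst. right; right. exists l1; auto.
  - injection H as E1 H. subst. destruct (IHl1 _ _ _ _ _ H) as [[-> [-> ->]]|[[k [-> ->]]|[k [-> ->]]]]; auto.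
    right; left; exists k; auto. right; right; exists k; auto.
Qed.

Lemma nth_rev_index {A} (lev : list A) D l d : length lev = D -> l < D -> nth (D - 1 - l) (rev lev) d = nth l lev d.
Proof. intros <- Hl. rewrite rev_nth by lia. f_equal. lia. Qed.

Lemma nth_map_seq {A} (f : nat -> A) n j d : j < n -> nth j (map f (seq 0 n)) d = f j.
Proof.
  intro Hj. rewrite nth_indep with (d' := f 0) by (rewrite length_map, length_seq; auto).
  rewrite map_nth. rewrite seq_nth; auto.
Qed.

Lemma map_nth_seq_length {A} (L : list A) d : map (fun l => nth l L d) (seq 0 (length L)) = L.
Proof.
  apply nth_ext with (d := d) (d' := d). rewrite length_map, length_seq; auto.
  intros n Hn. rewrite length_map, length_seq in Hn.
  rewrite (nth_map_seq (fun l => nth l L d)); auto.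
Qed.

Lemma Forall2_In_l {A B} (P : A -> B -> Prop) l1 l2 x : Forall2 P l1 l2 -> In x l1 -> exists y, In y l2 /\ P x y.
Proof. induction 1; simpl; intros []; subst; eauto. destruct (IHForall2 H1) as [y' [? ?]]; eauto. Qed.

Lemma map_fst_combine {A B} : forall (ps : list A) (ls : list B), length ps = length ls -> map fst (combine ps ls) = ps.
Proof. induction ps; destruct ls; simpl; intros; try discriminate; auto. f_equal; auto. Qed.

Lemma app_inj_length {A} (a1 a2 b1 b2 : list A) : length a1 = length b1 -> a1 ++ a2 = b1 ++ b2 -> a1 = b1 /\ a2 = b2.
Proof.
  revert b1; induction a1; destruct b1; simpl; intros; try discriminate; auto.
  injection H0 as -> H0. destruct (IHa1 b1); subst; auto.
Qed.

Lemma list_sum_filter {A} (F : A -> nat) p : forall l, list_sum (map F (filter p l)) <= list_sum (map F l).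
Proof. induction l; simpl; auto. destruct (p a); simpl; lia. Qed.

Lemma list_sum_map_In_le {A} (F : A -> nat) x : forall l, In x l -> F x <= list_sum (map F l).
Proof. induction l; simpl; intros []; subst; try lia. specialize (IHl H); lia. Qed.

(** * Weak call-by-value reduction *)

Fixpoint closed_at (k : nat) (M : lterm) : Prop :=
  match M with
  | LVar n => n < k
  | Lam M => closed_at (S k) M
  | App M N => closed_at k M /\ closed_at k N
  end.

Definition closed M := closed_at 0 M.

(* [csubst k l M] replaces the de Bruijn indices [k], ..., [k + length l - 1] of [M]
   by the closed terms of [l] (index [k + i] by the [i]-th one) and lowers the
   indices above; a block of beta-steps is one such substitution (see [beta_lams]). *)
Fixpoint csubst (k : nat) (l : list lterm) (M : lterm) : lterm :=
  match M with
  | LVar n => if n <? k then LVar n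
              else if n - k <? length l then nth (n - k) l (LVar 0)
              else LVar (n - length l)
  | Lam M => Lam (csubst (S k) l M)
  | App M N => App (csubst k l M) (csubst k l N)
  end.

Lemma closed_at_mono : forall M k, closed_at k M -> forall k', k <= k' -> closed_at k' M.
Proof.
  induction M; simpl; intros.
  - lia.
  - eapply IHM; eauto; lia.
  - destruct H; split; eauto.
Qed.

Lemma closed_any M k : closed M -> closed_at k M.
Proof. intro H; eapply closed_at_mono; eauto; lia. Qed.

Lemma lift_closed : forall M k, closed_at k M -> lift k M = M.
Proof.
  induction M; simpl; intros.
  - destruct (n <? k) eqn:E; auto. apply Nat.ltb_ge in E; lia.
  - f_equal; auto.
  - destruct H; f_equal; auto.
Qed.

Lemma csubst_closed : forall M k l, closed_at k M -> csubst k l M = M.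
Proof.
  induction M; simpl; intros.
  - destruct (n <? k) eqn:E; auto. apply Nat.ltb_ge in E; lia.
  - f_equal; auto.
  - destruct H; f_equal; auto.
Qed.

Lemma substk_csubst : forall M k V, closed V -> substk k V M = csubst k [V] M.
Proof.
  induction M; simpl; intros.
  - destruct (n <? k) eqn:E; auto.
    destruct (n =? k) eqn:E2.
    + apply Nat.eqb_eq in E2; subst. rewrite Nat.sub_diag. simpl. auto.
    + apply Nat.ltb_ge in E. apply Nat.eqb_neq in E2.
      destruct (n - k <? 1) eqn:E3. apply Nat.ltb_lt in E3; lia.
      f_equal; lia.
  - rewrite lift_closed by (apply closed_any; auto). f_equal; auto.
  - f_equal; auto.
Qed.

Lemma csubst_comp : forall M k l1 l2, Forall closed l1 -> Forall closed l2 ->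
  csubst k l1 (csubst (k + length l1) l2 M) = csubst k (l1 ++ l2) M.
Proof.
  induction M; simpl; intros k l1 l2 H1 H2.
  - rewrite length_app.
    destruct (n <? k + length l1) eqn:E.
    + simpl. destruct (n <? k) eqn:E1; auto.
      apply Nat.ltb_lt in E. apply Nat.ltb_ge in E1.
      destruct (n - k <? length l1) eqn:E3; [|apply Nat.ltb_ge in E3; lia].
      destruct (n - k <? length l1 + length l2) eqn:E4; [|apply Nat.ltb_ge in E4; lia].
      rewrite app_nth1; auto. apply Nat.ltb_lt; auto.
    + apply Nat.ltb_ge in E.
      destruct (n <? k) eqn:E1; [apply Nat.ltb_lt in E1; lia|].
      destruct (n - (k + length l1) <? length l2) eqn:E3.
      * apply Nat.ltb_lt in E3.
        rewrite csubst_closed.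
        2:{ apply closed_any. rewrite Forall_forall in H2. apply H2. apply nth_In; auto. }
        destruct (n - k <? length l1 + length l2) eqn:E4; [|apply Nat.ltb_ge in E4; lia].
        rewrite app_nth2 by lia. f_equal. lia.
      * apply Nat.ltb_ge in E3. simpl.
        destruct (n - length l2 <? k) eqn:E5; [apply Nat.ltb_lt in E5; lia|].
        destruct (n - length l2 - k <? length l1) eqn:E6; [apply Nat.ltb_lt in E6; lia|].
        destruct (n - k <? length l1 + length l2) eqn:E4; [apply Nat.ltb_lt in E4; lia|].
        f_equal; lia.
  - f_equal. replace (S (k + length l1)) with (S k + length l1) by lia. auto.
  - f_equal; auto.
Qed.

Lemma csubst_nil : forall M k, csubst k [] M = M.
Proof.
  induction M; simpl; intros.
  - destruct (n <? k); auto. f_equal; lia.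
  - f_equal; auto.
  - f_equal; auto.
Qed.

Lemma csubst_lams : forall n B k l, csubst k l (lams n B) = lams n (csubst (k + n) l B).
Proof.
  induction n; simpl; intros.
  - rewrite Nat.add_0_r; auto.
  - f_equal. rewrite IHn. replace (S k + n) with (k + S n) by lia. auto.
Qed.

Lemma apps_app M l1 l2 : apps M (l1 ++ l2) = apps (apps M l1) l2.
Proof. unfold apps. rewrite fold_left_app. auto. Qed.

Lemma csubst_apps : forall Ns M k l, csubst k l (apps M Ns) = apps (csubst k l M) (map (csubst k l) Ns).
Proof.
  induction Ns; simpl; intros; auto.
Qed.

Lemma closed_at_lams : forall n B k, closed_at k (lams n B) <-> closed_at (k + n) B.
Proof.
  induction n; simpl; intros. rewrite Nat.add_0_r; tauto.
  rewrite IHn. replace (S k + n) with (k + S n) by lia. tauto.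
Qed.

Lemma closed_at_apps : forall Ns M k, closed_at k (apps M Ns) <-> closed_at k M /\ Forall (closed_at k) Ns.
Proof.
  induction Ns; simpl; intros.
  - split; intros; [split; auto|tauto].
  - rewrite IHNs. simpl. rewrite Forall_cons_iff. tauto.
Qed.

Lemma closed_csubst : forall M k l, closed_at (k + length l) M -> Forall closed l -> closed_at k (csubst k l M).
Proof.
  induction M; simpl; intros k l H1 H2.
  - destruct (n <? k) eqn:E. apply Nat.ltb_lt in E; simpl; auto.
    destruct (n - k <? length l) eqn:E2.
    + apply closed_any. rewrite Forall_forall in H2. apply H2. apply nth_In. apply Nat.ltb_lt; auto.
    + apply Nat.ltb_ge in E2. apply Nat.ltb_ge in E. simpl. lia.
  - apply IHM; auto.
  - destruct H1; split; auto.
Qed.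

Lemma iter_trans {A} (Rl : A -> A -> Prop) : forall n x y, iter Rl n x y -> forall m z, iter Rl m y z -> iter Rl (n + m) x z.
Proof.
  induction 1; simpl; intros; auto. econstructor; eauto.
Qed.

Lemma iter_one {A} (Rl : A -> A -> Prop) x y : Rl x y -> iter Rl 1 x y.
Proof. intros; econstructor; eauto; constructor. Qed.

Lemma iter_map {A B} (Rl : A -> A -> Prop) (Rl' : B -> B -> Prop) (f : A -> B) :
  (forall x y, Rl x y -> Rl' (f x) (f y)) -> forall n x y, iter Rl n x y -> iter Rl' n (f x) (f y).
Proof. intros Hf; induction 1; econstructor; eauto. Qed.

Lemma iter_eq_r {A} (Rl : A -> A -> Prop) n x y y' : iter Rl n x y -> y = y' -> iter Rl n x y'.
Proof. intros; subst; auto. Qed.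

Lemma bv_apps_l : forall L M M', bv M M' -> bv (apps M L) (apps M' L).
Proof. induction L; simpl; intros; auto. apply IHL. constructor; auto. Qed.

Lemma bv_eq_r M N N' : bv M N -> N = N' -> bv M N'.
Proof. intros; subst; auto. Qed.

Lemma iter_appl n M M' L : iter bv n M M' -> iter bv n (App M L) (App M' L).
Proof. apply iter_map with (f := fun M => App M L). intros; constructor; auto. Qed.

Lemma iter_appr n M M' L : iter bv n M M' -> iter bv n (App L M) (App L M').
Proof. apply iter_map with (f := fun M => App L M). intros; constructor; auto. Qed.

Lemma is_value_lams n B : 0 < n -> is_value (lams n B).
Proof. destruct n; simpl; auto. lia. Qed.

Lemma beta_lams : forall Vs n B, length Vs = n -> Forall closed Vs -> Forall is_value Vs ->
  iter bv n (apps (lams n B) Vs) (csubst 0 (rev Vs) B).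
Proof.
  induction Vs as [|V Vs IH]; simpl; intros n B Hl Hc Hv.
  - subst. simpl. rewrite csubst_nil. constructor.
  - destruct n; [discriminate|]. injection Hl as Hl.
    inversion Hc; inversion Hv; subst.
    simpl. econstructor.
    + apply bv_apps_l. constructor; auto.
    + unfold lsubst. rewrite substk_csubst by auto. rewrite csubst_lams. simpl.
      rewrite <- csubst_comp.
      * rewrite length_rev. apply IH; auto.
      * apply Forall_rev; auto.
      * constructor; auto.
Qed.

Inductive frame := FL (N : lterm) | FR (L : lterm).
Definition plugf fr M := match fr with FL N => App M N | FR L => App L M end.
Fixpoint plug (K : list frame) M := match K with [] => M | fr :: K => plug K (plugf fr M) end.

Lemma bv_plug : forall K M M', bv M M' -> bv (plug K M) (plug K M').
Proof.
  induction K as [|[]]; simpl; intros; auto; apply IHK; constructor; auto.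
Qed.

Lemma iter_plug K n M M' : iter bv n M M' -> iter bv n (plug K M) (plug K M').
Proof. apply iter_map with (f := plug K). apply bv_plug. Qed.

Lemma apps_plug : forall l M, apps M l = plug (map FL l) M.
Proof. induction l; simpl; auto. Qed.

Lemma plug_app : forall K1 K2 M, plug (K1 ++ K2) M = plug K2 (plug K1 M).
Proof. induction K1; simpl; auto. Qed.

Lemma apps_split X pre a post :
  apps X (pre ++ a :: post) = plug (FR (apps X pre) :: map FL post) a.
Proof. rewrite apps_app. simpl. rewrite apps_plug. auto. Qed.

Lemma diverges_of_progress {A} (Rl : A -> A -> Prop) (Q : A -> Prop) :
  (forall x, Q x -> exists y k, iter Rl (S k) x y /\ Q y) ->
  forall x, Q x -> diverges Rl x.
Proof.
  intros HQ x0 Hx0.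
  (* [P x]: some [Q]-state is reachable from [x]; by [HQ] every [P]-state has a [P]-successor. *)
  set (P := fun x => exists y k, iter Rl k x y /\ Q y).
  assert (HP : forall x, P x -> exists x', Rl x x' /\ P x').
  { intros x [y [k [Hi Hy]]]. destruct k.
    - inversion Hi; subst. destruct (HQ _ Hy) as [y' [k [Hi' Hy']]].
      inversion Hi'; subst. eexists; split; eauto. exists y', k; auto.
    - inversion Hi; subst. eexists; split; eauto. exists y, k; auto. }
  assert (HP0 : P x0) by (exists x0, 0; split; auto; constructor).
  set (step := fun (x : {x | P x}) =>
     let (x, Hx) := x in
     let (x', Hx') := constructive_indefinite_description _ (HP x Hx) in
     exist P x' (proj2 Hx')).
  exists (fun n => proj1_sig (Nat.iter n step (exist P x0 HP0))). split; [reflexivity|].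
  intro n. simpl. destruct (Nat.iter n step (exist P x0 HP0)) as [x Hx].
  simpl. destruct (constructive_indefinite_description _ (HP x Hx)) as [x' [H1 H2]]. auto.
Qed.

(** * Orthogonal constructor rewriting *)

Section TermInd.
Variable P : term -> Prop.
Hypothesis Hv : forall x, P (Var x).
Hypothesis Hc : forall i ts, Forall P ts -> P (Con i ts).
Hypothesis Hf : forall i ts, Forall P ts -> P (Fun i ts).
Fixpoint term_ind' (t : term) : P t :=
  match t with
  | Var x => Hv x
  | Con i ts => Hc i ts ((fix go l := match l return Forall P l with
                           | [] => Forall_nil _ | t :: l => Forall_cons _ (term_ind' t) (go l) end) ts)
  | Fun i ts => Hf i ts ((fix go l := match l return Forall P l with
                           | [] => Forall_nil _ | t :: l => Forall_cons _ (term_ind' t) (go l) end) ts)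
  end.
End TermInd.

Lemma tsubst_ext : forall t s1 s2, (forall x, In x (vars t) -> s1 x = s2 x) -> tsubst s1 t = tsubst s2 t.
Proof.
  intro t; induction t using term_ind'; simpl; intros s1 s2 Hs; auto;
    f_equal; apply map_ext_in; intros a Ha; rewrite Forall_forall in H; apply H; auto;
    intros x Hx; apply Hs, in_flat_map; eauto.
Qed.

Lemma tsubst_inj_vars : forall t s1 s2, tsubst s1 t = tsubst s2 t -> forall x, In x (vars t) -> s1 x = s2 x.
Proof.
  intro t; induction t using term_ind'; simpl; intros s1 s2 Es y Hy;
    [destruct Hy as [<-|[]]; auto| |];
    injection Es as Es; apply in_flat_map in Hy; destruct Hy as [a [Ha Hy]];
    rewrite Forall_forall in H; apply (H a Ha s1 s2); auto; exact (map_eq_In _ _ a ts Ha Es).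
Qed.

Section TRS.
Variables (g h : nat) (car far : nat -> nat) (R : list rule).
Hypothesis HR : orthogonal_crs g h car far R.

Notation cterm := (is_cterm g car).
Notation rs := (rstep g car R).

Definition compiles_to (F : nat -> lterm) (k : nat) : Prop :=
  forall (f : nat) (ts : list term),
    f < h -> length ts = far f -> Forall cterm ts ->
    (forall (v : term) (n : nat),
        cterm v -> iter rs n (Fun f ts) v ->
        exists j, j <= k * n /\ iter bv j (apps (F f) (map (scott g) ts)) (scott g v)) /\
    (forall v : term,
        star rs (Fun f ts) v -> rnormal g car R v -> ~ cterm v ->
        star bv (apps (F f) (map (scott g) ts)) (lbot g)) /\
    (diverges rs (Fun f ts) -> diverges bv (apps (F f) (map (scott g) ts))).

Lemma cterm_con i ts : cterm (Con i ts) <-> i < g /\ length ts = car i /\ Forall cterm ts.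
Proof. simpl. rewrite Forall_id_map. tauto. Qed.

Lemma pattern_con i ts : is_pattern g car (Con i ts) <-> i < g /\ length ts = car i /\ Forall (is_pattern g car) ts.
Proof. simpl. rewrite Forall_id_map. tauto. Qed.

Lemma term_con i ts : is_term g h car far (Con i ts) <-> i < g /\ length ts = car i /\ Forall (is_term g h car far) ts.
Proof. simpl. rewrite Forall_id_map. tauto. Qed.

Lemma term_fun i ts : is_term g h car far (Fun i ts) <-> i < h /\ length ts = far i /\ Forall (is_term g h car far) ts.
Proof. simpl. rewrite Forall_id_map. tauto. Qed.

Lemma pattern_subst_cterm : forall p s, is_pattern g car p -> (forall x, cterm (s x)) -> cterm (tsubst s p).
Proof.
  intro p; induction p using term_ind'; intros s Hp Hs.
  - simpl; auto.
  - apply pattern_con in Hp. destruct Hp as [H1 [H2 H3]]. simpl tsubst. apply cterm_con.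
    rewrite length_map. repeat split; auto.
    rewrite Forall_map. rewrite Forall_forall in *. intros; auto.
  - destruct Hp.
Qed.

Lemma subst_cterm_vars : forall t s, cterm (tsubst s t) -> forall x, In x (vars t) -> cterm (s x).
Proof.
  intro t; induction t using term_ind'; intros s Hc y Hy.
  - simpl in *. destruct Hy as [<-|[]]; auto.
  - simpl tsubst in Hc. apply cterm_con in Hc. destruct Hc as [_ [_ Hc]].
    simpl in Hy. apply in_flat_map in Hy. destruct Hy as [a [Ha Hy]].
    rewrite Forall_forall in H. apply (H a Ha s); auto.
    rewrite Forall_map, Forall_forall in Hc. auto.
  - simpl in Hc. destruct Hc.
Qed.

Lemma rstep_con_inv i l u : rs (Con i l) u ->
  exists l1 a l2 a', l = l1 ++ a :: l2 /\ u = Con i (l1 ++ a' :: l2) /\ rs a a'.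
Proof.
  intro H. remember (Con i l) as c eqn:Ec. destruct H.
  - unfold rlhs in Ec. simpl in Ec. discriminate.
  - injection Ec as E1 E2; subst. exists l1, t, l2, t'. auto.
  - discriminate.
Qed.

Lemma rstep_fun_inv f l u : rs (Fun f l) u ->
  (exists r s, In r R /\ (forall x, cterm (s x)) /\ rfun r = f /\ l = map (tsubst s) (rpats r) /\
     u = tsubst s (rrhs r)) \/
  (exists l1 a l2 a', l = l1 ++ a :: l2 /\ u = Fun f (l1 ++ a' :: l2) /\ rs a a').
Proof.
  intro H. remember (Fun f l) as c eqn:Ec. destruct H.
  - left. unfold rlhs in Ec. simpl in Ec. injection Ec as E1 E2. exists r, s; auto.
  - discriminate.
  - right. injection Ec as E1 E2; subst. exists l1, t, l2, t'. auto.
Qed.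

Lemma cterm_rnormal : forall t, cterm t -> forall t', ~ rs t t'.
Proof.
  intro t; induction t using term_ind'; intros Hc t' Hs.
  - destruct Hc.
  - apply rstep_con_inv in Hs. destruct Hs as [l1 [a [l2 [a' [-> [-> Hs]]]]]].
    apply cterm_con in Hc. destruct Hc as [_ [_ Hc]].
    rewrite Forall_forall in H, Hc. apply (H a (in_elt _ _ _) (Hc a (in_elt _ _ _)) a' Hs).
  - destruct Hc.
Qed.

Lemma rule_wf r : In r R -> wf_rule g h car far r.
Proof. intro Hr. destruct HR as [H _]. rewrite Forall_forall in H. auto. Qed.

Lemma rule_linear r : In r R -> left_linear r.
Proof. intro Hr. destruct HR as [_ [H _]]. rewrite Forall_forall in H. auto. Qed.

Lemma rule_unique r1 r2 s1 s2 : In r1 R -> In r2 R ->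
  tsubst s1 (rlhs r1) = tsubst s2 (rlhs r2) -> r1 = r2.
Proof.
  intros H1 H2 E. destruct HR as [_ [_ HO]].
  apply (In_nth _ _ r1) in H1. apply (In_nth _ _ r1) in H2.
  destruct H1 as [n1 [Hn1 E1]]. destruct H2 as [n2 [Hn2 E2]].
  destruct (Nat.eq_dec n1 n2).
  - subst. auto.
  - exfalso. apply (HO n1 n2 r1 Hn1 Hn2 n). rewrite E1, E2. exists s1, s2. auto.
Qed.

Lemma rule_args_cterm r s : In r R -> (forall x, cterm (s x)) -> Forall cterm (map (tsubst s) (rpats r)).
Proof.
  intros Hr Hs. destruct (rule_wf r Hr) as [_ [_ [Hp _]]].
  rewrite Forall_map. rewrite Forall_forall in *. intros. apply pattern_subst_cterm; auto.
Qed.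

Lemma root_step_unique r1 r2 s1 s2 : In r1 R -> In r2 R ->
  tsubst s1 (rlhs r1) = tsubst s2 (rlhs r2) -> tsubst s1 (rrhs r1) = tsubst s2 (rrhs r2).
Proof.
  intros H1 H2 E. pose proof (rule_unique _ _ _ _ H1 H2 E); subst.
  apply tsubst_ext. intros x Hx. apply (tsubst_inj_vars _ _ _ E).
  destruct (rule_wf r2 H2) as [_ [_ [_ [_ Hi]]]]. auto.
Qed.

Lemma root_step_no_inner r s f l1 a l2 a' : In r R -> (forall x, cterm (s x)) ->
  tsubst s (rlhs r) = Fun f (l1 ++ a :: l2) -> ~ rs a a'.
Proof.
  intros Hr Hs E. unfold rlhs in E. simpl in E. injection E as _ E.
  pose proof (rule_args_cterm r s Hr Hs) as Hc. rewrite E in Hc.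
  rewrite Forall_forall in Hc. apply cterm_rnormal. apply Hc. apply in_elt.
Qed.

Lemma args_diamond (C : list term -> term)
  (HC : forall l1 l2 t t', rs t t' -> rs (C (l1 ++ t :: l2)) (C (l1 ++ t' :: l2)))
  l1 a a' l2 m1 b b' m2 : l1 ++ a :: l2 = m1 ++ b :: m2 -> rs a a' -> rs b b' ->
  (forall b', rs a b' -> a' = b' \/ exists w, rs a' w /\ rs b' w) ->
  C (l1 ++ a' :: l2) = C (m1 ++ b' :: m2) \/
  exists w, rs (C (l1 ++ a' :: l2)) w /\ rs (C (m1 ++ b' :: m2)) w.
Proof.
  intros El Ha Hb IH.
  destruct (list_split_eq _ _ _ _ _ _ El) as [[-> [-> ->]]|[[k [-> ->]]|[k [-> ->]]]].
  - destruct (IH _ Hb) as [->|[w [Hw1 Hw2]]]; auto.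
    right. exists (C (m1 ++ w :: m2)). split; apply HC; auto.
  - right. exists (C (l1 ++ a' :: k ++ b' :: m2)). split.
    + change (rs (C (l1 ++ (a' :: k) ++ b :: m2)) (C (l1 ++ (a' :: k) ++ b' :: m2))).
      rewrite !app_assoc. apply HC; auto.
    + rewrite <- app_assoc. apply HC; auto.
  - right. exists (C (m1 ++ b' :: k ++ a' :: l2)). split.
    + rewrite <- app_assoc. apply HC; auto.
    + change (rs (C (m1 ++ (b' :: k) ++ a :: l2)) (C (m1 ++ (b' :: k) ++ a' :: l2))).
      rewrite !app_assoc. apply HC; auto.
Qed.

Lemma rstep_diamond : forall t t1 t2, rs t t1 -> rs t t2 -> t1 = t2 \/ exists w, rs t1 w /\ rs t2 w.
Proof.
  intros t t1 t2 H1. revert t2. induction H1; intros t2 H2.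
  - unfold rlhs in H2 at 1. simpl in H2. apply rstep_fun_inv in H2.
    destruct H2 as [[r' [s' [Hr' [Hs' [Ef [El ->]]]]]]|[l1 [a [l2 [a' [El [-> Ha]]]]]]].
    + left. apply root_step_unique; auto. unfold rlhs. simpl. rewrite Ef, <- El. auto.
    + exfalso. eapply root_step_no_inner; eauto. unfold rlhs. simpl. rewrite El. reflexivity.
  - apply rstep_con_inv in H2. destruct H2 as [m1 [b [m2 [b' [El [-> Hb]]]]]].
    apply (args_diamond (Con i)) with (a := t) (b := b); auto. intros; constructor; auto.
  - apply rstep_fun_inv in H2.
    destruct H2 as [[r' [s' [Hr' [Hs' [Ef [El ->]]]]]]|[m1 [b [m2 [b' [El [-> Hb]]]]]]].
    + exfalso. eapply root_step_no_inner; eauto. unfold rlhs. simpl. rewrite Ef, <- El. reflexivity.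
    + apply (args_diamond (Fun i)) with (a := t) (b := b); auto. intros; constructor; auto.
Qed.

Lemma rstep_nf_step : forall n t v, iter rs n t v -> rnormal g car R v ->
  forall t1, rs t t1 -> exists n', n = S n' /\ iter rs n' t1 v.
Proof.
  induction 1 as [x|n x y z Hxy Hyz IH]; intros Hn t1 H1.
  - exfalso. eapply Hn; eauto.
  - exists n. split; auto.
    destruct (rstep_diamond _ _ _ H1 Hxy) as [->|[w [Hw1 Hw2]]]; auto.
    destruct (IH Hn w Hw2) as [n' [-> Hw]]. econstructor; eauto.
Qed.

Lemma rstep_nf_bound : forall m t u, iter rs m t u -> forall n v, iter rs n t v -> rnormal g car R v ->
  m <= n /\ iter rs (n - m) u v.
Proof.
  induction 1 as [x|m x y z Hxy Hyz IH]; intros n v Hv Hn.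
  - rewrite Nat.sub_0_r. auto with arith.
  - destruct (rstep_nf_step _ _ _ Hv Hn _ Hxy) as [n' [-> Hy]].
    destruct (IH _ _ Hy Hn). split; [lia|]. simpl. auto.
Qed.

Lemma rstep_nf_unique n t v m u : iter rs n t v -> rnormal g car R v -> iter rs m t u -> rnormal g car R u ->
  n = m /\ u = v.
Proof.
  intros H1 H2 H3 H4. destruct (rstep_nf_bound _ _ _ H3 _ _ H1 H2) as [Hle Hi].
  destruct (n - m) eqn:E.
  - inversion Hi; subst. split; auto; lia.
  - inversion Hi; subst. exfalso. eapply H4; eauto.
Qed.

Lemma rstep_nf_not_diverges n t v : iter rs n t v -> rnormal g car R v -> ~ diverges rs t.
Proof.
  intros H1 H2 [sq [H0 Hs]].
  assert (Hk : forall k, iter rs k t (sq k)).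
  { induction k; [rewrite H0; constructor|].
    rewrite <- Nat.add_1_r at 1. apply iter_trans with (y := sq k); auto. apply iter_one; auto. }
  destruct (rstep_nf_bound _ _ _ (Hk (S n)) _ _ H1 H2). lia.
Qed.

Definition all_some (l : list (option term)) : option (list term) :=
  fold_right (fun o acc => match o, acc with Some v, Some vs => Some (v :: vs) | _, _ => None end) (Some []) l.

Lemma all_some_spec : forall l vs, all_some l = Some vs <-> l = map Some vs.
Proof.
  intros l; induction l as [|o l IH]; intros vs; simpl.
  - split; intro H. injection H as <-; auto. destruct vs; simpl in *; congruence.
  - destruct o as [v|].
    + destruct (all_some l) as [vs'|] eqn:E.
      * split; intro H. injection H as <-. simpl. f_equal. apply IH; auto.
        destruct vs; simpl in H; [discriminate|]. injection H as -> H. apply IH in H. congruence.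
      * split; intro H; [discriminate|]. destruct vs; simpl in H; [discriminate|].
        injection H as -> H. apply IH in H. congruence.
    + split; intro H; [discriminate|]. destruct vs; simpl in H; discriminate.
Qed.

Definition rule_matches f vs := exists r s, In r R /\ rfun r = f /\ (forall x, cterm (s x)) /\
  map (tsubst s) (rpats r) = vs.

(* Innermost evaluation: [eval s t o n] says that [tsubst s t] reaches its normal form
   in [n] steps, with outcome [Some v] if that normal form is the constructor term [v]
   and [None] if it is not a constructor term. *)
Inductive eval : (nat -> term) -> term -> option term -> nat -> Prop :=
| eval_var s x : eval s (Var x) (Some (s x)) 0
| eval_con s i ts os n : evals s ts os n -> eval s (Con i ts) (option_map (Con i) (all_some os)) n
| eval_arg_err s f ts os n : evals s ts os n -> all_some os = None -> eval s (Fun f ts) None n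
| eval_no_match s f ts os vs n : evals s ts os n -> all_some os = Some vs -> ~ rule_matches f vs -> eval s (Fun f ts) None n
| eval_rule s f ts os vs n r sg o m : evals s ts os n -> all_some os = Some vs -> In r R -> rfun r = f ->
    (forall x, cterm (sg x)) -> map (tsubst sg) (rpats r) = vs -> eval sg (rrhs r) o m ->
    eval s (Fun f ts) o (n + S m)
with evals : (nat -> term) -> list term -> list (option term) -> nat -> Prop :=
| evals_nil s : evals s [] [] 0
| evals_cons s t ts o os n m : eval s t o n -> evals s ts os m -> evals s (t :: ts) (o :: os) (n + m).

Scheme eval_mut := Induction for eval Sort Prop with evals_mut := Induction for evals Sort Prop.
Combined Scheme eval_evals_mut from eval_mut, evals_mut.

Inductive iter_args : list term -> list term -> nat -> Prop :=
| iter_args_nil : iter_args [] [] 0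
| iter_args_cons a a' n l l' m : iter rs n a a' -> iter_args l l' m -> iter_args (a :: l) (a' :: l') (n + m).

Section ArgContext.
Variable C : list term -> term.
Hypothesis HC : forall l1 l2 t t', rs t t' -> rs (C (l1 ++ t :: l2)) (C (l1 ++ t' :: l2)).

Lemma iter_ctx l1 l2 n a a' : iter rs n a a' -> iter rs n (C (l1 ++ a :: l2)) (C (l1 ++ a' :: l2)).
Proof. apply iter_map with (f := fun x => C (l1 ++ x :: l2)). auto. Qed.

Lemma iter_args_ctx : forall l l' n, iter_args l l' n -> forall pre, iter rs n (C (pre ++ l)) (C (pre ++ l')).
Proof.
  induction 1; intros pre. constructor.
  apply iter_trans with (y := C (pre ++ a' :: l)). apply iter_ctx; auto.
  replace (pre ++ a' :: l) with ((pre ++ [a']) ++ l) by (rewrite <- app_assoc; auto).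
  replace (pre ++ a' :: l') with ((pre ++ [a']) ++ l') by (rewrite <- app_assoc; auto). auto.
Qed.
End ArgContext.

Definition outcome_nf (o : option term) (w : term) : Prop :=
  match o with Some v => w = v /\ cterm v | None => rnormal g car R w /\ ~ cterm w end.

Lemma outcome_nf_normal o w : outcome_nf o w -> rnormal g car R w.
Proof. destruct o; simpl; intros [H1 H2]; auto. subst. intro; apply cterm_rnormal; auto. Qed.

Lemma outcome_nf_some : forall os ws, Forall2 outcome_nf os ws -> forall vs, os = map Some vs -> ws = vs /\ Forall cterm vs.
Proof.
  induction 1; intros vs E. destruct vs; [auto|discriminate].
  destruct vs; [discriminate|]. injection E as -> E. destruct (IHForall2 _ E) as [-> H2].
  destruct H as [-> H]. auto.
Qed.

Lemma outcome_nf_none : forall os ws, Forall2 outcome_nf os ws -> all_some os = None -> exists w, In w ws /\ ~ cterm w.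
Proof.
  induction 1; simpl; intros E. discriminate.
  destruct x as [v|].
  - destruct (all_some l) eqn:E2; [discriminate|]. destruct (IHForall2 eq_refl) as [w [Hw Hc]]. eauto.
  - exists y. destruct H. auto.
Qed.

Lemma con_normal i ws : Forall (rnormal g car R) ws -> rnormal g car R (Con i ws).
Proof.
  intros H t' Hs. apply rstep_con_inv in Hs. destruct Hs as [l1 [a [l2 [a' [-> [_ Hs]]]]]].
  rewrite Forall_forall in H. eapply (H a (in_elt _ _ _)); eauto.
Qed.

Lemma fun_normal f ws : Forall (rnormal g car R) ws -> ~ rule_matches f ws -> rnormal g car R (Fun f ws).
Proof.
  intros H Hm t' Hs. apply rstep_fun_inv in Hs.
  destruct Hs as [[r [s [Hr [Hs [Ef [El _]]]]]]|[l1 [a [l2 [a' [-> [_ Hs]]]]]]].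
  - apply Hm. exists r, s. auto.
  - rewrite Forall_forall in H. eapply (H a (in_elt _ _ _)); eauto.
Qed.

Lemma outcome_nf_all_normal os ws : Forall2 outcome_nf os ws -> Forall (rnormal g car R) ws.
Proof. induction 1; constructor; eauto using outcome_nf_normal. Qed.

Lemma evals_length s ts os n : evals s ts os n -> length ts = length os.
Proof. induction 1; simpl; auto. Qed.

Lemma eval_sound :
  (forall s t o n, eval s t o n -> (forall x, cterm (s x)) -> is_term g h car far t ->
     exists w, iter rs n (tsubst s t) w /\ outcome_nf o w) /\
  (forall s ts os n, evals s ts os n -> (forall x, cterm (s x)) -> Forall (is_term g h car far) ts ->
     exists ws, iter_args (map (tsubst s) ts) ws n /\ Forall2 outcome_nf os ws).
Proof.
  apply eval_evals_mut.
  - intros s x Hs _. exists (s x). split. constructor. simpl; auto.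
  - intros s i ts os n HE IH Hs Ht. apply term_con in Ht. destruct Ht as [Hi [Hl Ht]].
    destruct (IH Hs Ht) as [ws [Hli HF]].
    exists (Con i ws). split. simpl. apply (iter_args_ctx (Con i) (rstep_con _ _ _ i) _ _ _ Hli []).
    destruct (all_some os) as [vs|] eqn:E1.
    + apply all_some_spec in E1. destruct (outcome_nf_some _ _ HF _ E1) as [-> Hc]. simpl. split; auto.
      apply cterm_con. repeat split; auto. subst.
      apply evals_length in HE. rewrite length_map in HE. congruence.
    + simpl. split. apply con_normal. eapply outcome_nf_all_normal; eauto.
      intro Hc. apply cterm_con in Hc. destruct Hc as [_ [_ Hc]].
      destruct (outcome_nf_none _ _ HF E1) as [w [Hw Hnc]]. rewrite Forall_forall in Hc. auto.
  - intros s f ts os n HE IH E1 Hs Ht. apply term_fun in Ht. destruct Ht as [Hi [Hl Ht]].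
    destruct (IH Hs Ht) as [ws [Hli HF]].
    exists (Fun f ws). split. simpl. apply (iter_args_ctx (Fun f) (rstep_fun _ _ _ f) _ _ _ Hli []).
    simpl. split; [|simpl; auto]. apply fun_normal. eapply outcome_nf_all_normal; eauto.
    intros [r [s' [Hr [Ef [Hs' Em]]]]].
    destruct (outcome_nf_none _ _ HF E1) as [w [Hw Hnc]].
    pose proof (rule_args_cterm r s' Hr Hs') as Hc. rewrite Em in Hc.
    rewrite Forall_forall in Hc. auto.
  - intros s f ts os vs n HE IH E1 Hm Hs Ht. apply term_fun in Ht. destruct Ht as [Hi [Hl Ht]].
    destruct (IH Hs Ht) as [ws [Hli HF]].
    apply all_some_spec in E1. destruct (outcome_nf_some _ _ HF _ E1) as [-> Hc].
    exists (Fun f vs). split. simpl. apply (iter_args_ctx (Fun f) (rstep_fun _ _ _ f) _ _ _ Hli []).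
    simpl. split; [|simpl; auto]. apply fun_normal; auto.
    rewrite Forall_forall in *. intros x Hx t'. apply cterm_rnormal. auto.
  - intros s f ts os vs n r sg o m HE IH E1 Hr Ef Hsg Em HE2 IH2 Hs Ht.
    apply term_fun in Ht. destruct Ht as [Hi [Hl Ht]].
    destruct (IH Hs Ht) as [ws [Hli HF]].
    apply all_some_spec in E1. destruct (outcome_nf_some _ _ HF _ E1) as [-> Hc].
    destruct (rule_wf r Hr) as [_ [_ [_ [Hrt _]]]].
    destruct (IH2 Hsg Hrt) as [w [Hw Hrel]].
    exists w. split; auto.
    apply iter_trans with (y := Fun f vs). simpl. apply (iter_args_ctx (Fun f) (rstep_fun _ _ _ f) _ _ _ Hli []).
    econstructor; [|exact Hw].
    replace (Fun f vs) with (tsubst sg (rlhs r)). constructor; auto.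
    unfold rlhs. simpl. congruence.
  - intros s _ _. exists []. split; constructor.
  - intros s t ts o os n m HE IH HEs IHs Hs Ht. inversion Ht; subst.
    destruct (IH Hs H1) as [w [Hw Hr]]. destruct (IHs Hs H2) as [ws [Hws Hrs]].
    exists (w :: ws). split. simpl. constructor; auto. constructor; auto.
Qed.

Definition evaluates s t := exists o n, eval s t o n.

Lemma evals_exists s : forall ts, Forall (evaluates s) ts -> exists os k, evals s ts os k.
Proof.
  induction 1. exists [], 0; constructor.
  destruct H as [o [k H]]. destruct IHForall as [os [k' H']]. exists (o :: os), (k + k'). constructor; auto.
Qed.

Lemma args_bounded C (HC : forall l1 l2 t t', rs t t' -> rs (C (l1 ++ t :: l2)) (C (l1 ++ t' :: l2))) l n :
  (forall m u, iter rs m (C l) u -> m <= n) -> forall t, In t l -> forall m u, iter rs m t u -> m <= n.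
Proof.
  intros Hb t Hin m u Hu. destruct (in_split _ _ Hin) as [l1 [l2 ->]].
  apply (Hb m (C (l1 ++ u :: l2))). apply iter_ctx; auto.
Qed.

Lemma eval_of_bounded : forall n s t, (forall x, cterm (s x)) -> is_term g h car far t ->
  (forall m u, iter rs m (tsubst s t) u -> m <= n) -> evaluates s t.
Proof.
  intro n. induction n as [n IHn] using (well_founded_induction lt_wf).
  intros s t Hs. revert n IHn. induction t using term_ind'; intros n IHn Ht Hb.
  - exists (Some (s x)), 0. constructor.
  - apply term_con in Ht. destruct Ht as [Hi [Hl Ht]].
    assert (Hargs : Forall (evaluates s) ts).
    { rewrite Forall_forall in *. intros t Hin. apply (H t Hin n IHn (Ht t Hin)).
      apply (args_bounded (Con i) (rstep_con _ _ _ i) _ _ Hb). apply in_map; auto. }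
    destruct (evals_exists _ _ Hargs) as [os [k HE]]. eexists; eexists. constructor; eauto.
  - apply term_fun in Ht. destruct Ht as [Hi [Hl Ht]].
    assert (Hargs : Forall (evaluates s) ts).
    { rewrite Forall_forall in *. intros t Hin. apply (H t Hin n IHn (Ht t Hin)).
      apply (args_bounded (Fun i) (rstep_fun _ _ _ i) _ _ Hb). apply in_map; auto. }
    destruct (evals_exists _ _ Hargs) as [os [k HE]].
    destruct (all_some os) as [vs|] eqn:E1.
    2:{ exists None, k. eapply eval_arg_err; eauto. }
    destruct (classic (rule_matches i vs)) as [[r [sg [Hr [Ef [Hsg Em]]]]]|Hn].
    2:{ exists None, k. eapply eval_no_match; eauto. }
    destruct (proj2 eval_sound _ _ _ _ HE Hs Ht) as [ws [Hli HF]].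
    pose proof E1 as E2. apply all_some_spec in E2. destruct (outcome_nf_some _ _ HF _ E2) as [-> Hc].
    assert (Hst : iter rs (k + 1) (tsubst s (Fun i ts)) (tsubst sg (rrhs r))).
    { apply iter_trans with (y := Fun i vs). simpl. apply (iter_args_ctx (Fun i) (rstep_fun _ _ _ i) _ _ _ Hli []).
      apply iter_one. replace (Fun i vs) with (tsubst sg (rlhs r)). constructor; auto.
      unfold rlhs. simpl. congruence. }
    pose proof (Hb _ _ Hst) as Hkn.
    destruct (rule_wf r Hr) as [_ [_ [_ [Hrt _]]]].
    destruct (IHn (n - (k + 1)) ltac:(lia) sg (rrhs r) Hsg Hrt) as [o [m HE2]].
    { intros m u Hu. pose proof (Hb _ _ (iter_trans _ _ _ _ Hst _ _ Hu)). lia. }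
    exists o, (k + S m). eapply eval_rule; eauto.
Qed.

Lemma eval_of_nf s t n v : (forall x, cterm (s x)) -> is_term g h car far t ->
  iter rs n (tsubst s t) v -> rnormal g car R v -> exists o, eval s t o n /\ outcome_nf o v.
Proof.
  intros Hs Ht Hi Hn.
  destruct (eval_of_bounded n s t Hs Ht) as [o [k HE]].
  { intros m u Hu. apply (rstep_nf_bound _ _ _ Hu _ _ Hi Hn). }
  destruct (proj1 eval_sound _ _ _ _ HE Hs Ht) as [w [Hw Hr]].
  destruct (rstep_nf_unique _ _ _ _ _ Hi Hn Hw (outcome_nf_normal _ _ Hr)) as [-> ->]. eauto.
Qed.

Lemma diverges_not_evaluates s t : (forall x, cterm (s x)) -> is_term g h car far t ->
  diverges rs (tsubst s t) -> ~ evaluates s t.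
Proof.
  intros Hs Ht Hdiv [o [k HE]]. destruct (proj1 eval_sound _ _ _ _ HE Hs Ht) as [w [Hw Hr]].
  exact (rstep_nf_not_diverges _ _ _ Hw (outcome_nf_normal _ _ Hr) Hdiv).
Qed.

(** * Compilation to Scott-encoded lambda-terms *)

Definition lid := Lam (LVar 0).

(* Compiled code uses de Bruijn levels: [lvar D l] is the variable of level [l] under [D]
   binders. Code of depth [D] runs in an environment [lev] of [D] closed values, by
   [csubst 0 (rev lev)]. *)
Definition lvar (D l : nat) := LVar (D - 1 - l).

Definition encode (o : option term) := match o with Some v => scott g v | None => lbot g end.

Fixpoint sum_below (f : nat -> nat) (n : nat) := match n with 0 => 0 | S n => sum_below f n + f n end.
Lemma sum_below_le f : forall n j, j < n -> f j <= sum_below f n.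
Proof. induction n; simpl; intros. lia. destruct (Nat.eq_dec j n). subst; lia. specialize (IHn j); lia. Qed.

Definition car_total := sum_below car g.
(* A case selection on a value with head constructor [j] takes [S g + (car j + 1)] steps. *)
Definition sel_cost := g + 2 + car_total.
Lemma car_le_total j : j < g -> car j <= car_total.
Proof. apply sum_below_le. Qed.

Lemma lid_closed : closed lid.
Proof. cbv. lia. Qed.

Lemma lbot_closed : closed (lbot g).
Proof. unfold lbot, closed. apply closed_at_lams. simpl. lia. Qed.

Lemma scott_closed : forall v, cterm v -> closed (scott g v).
Proof.
  intro v; induction v using term_ind'; intro Hc.
  - destruct Hc.
  - apply cterm_con in Hc. destruct Hc as [Hi [Hl Hc]]. simpl. unfold closed.
    apply closed_at_lams. apply closed_at_apps. split. simpl. lia.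
    rewrite Forall_map. rewrite Forall_forall in *. intros x Hx. apply closed_any. auto.
  - destruct Hc.
Qed.

Lemma scott_env_closed ws : Forall cterm ws -> Forall closed (map (scott g) ws ++ [lid]).
Proof.
  intro Hws. apply Forall_app. split; [|constructor; [apply lid_closed|constructor]].
  rewrite Forall_map. eapply Forall_impl; [|exact Hws]. apply scott_closed.
Qed.

Lemma scott_value v : cterm v -> is_value (scott g v).
Proof. destruct v; simpl; intros []; auto. Qed.

Definition outcome_wf (o : option term) := forall v, o = Some v -> cterm v.

Lemma encode_closed o : outcome_wf o -> closed (encode o).
Proof. destruct o; simpl; intros H. apply scott_closed; auto. apply lbot_closed. Qed.

Lemma encode_value o : outcome_wf o -> is_value (encode o).
Proof. destruct o; simpl; intros H. apply scott_value; auto. auto. Qed.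

Lemma csubst_lvar lev D l : length lev = D -> l < D -> csubst 0 (rev lev) (lvar D l) = nth l lev lid.
Proof.
  intros HD Hl. unfold lvar. simpl. rewrite Nat.sub_0_r.
  rewrite length_rev. destruct (D - 1 - l <? length lev) eqn:E; [|apply Nat.ltb_ge in E; lia].
  rewrite nth_indep with (d' := lid) by (rewrite length_rev; lia).
  apply nth_rev_index; auto.
Qed.

Lemma scott_case i ws cases d : i < g -> length cases = g -> Forall closed cases -> Forall is_value cases ->
  closed d -> is_value d -> Forall cterm ws ->
  iter bv (S g) (apps (scott g (Con i ws)) (cases ++ [d])) (apps (nth i cases d) (map (scott g) ws)).
Proof.
  intros Hi Hl Hc Hv Hcd Hvd Hw. unfold scott; fold (scott g).
  eapply iter_eq_r. apply beta_lams.
  - rewrite length_app; simpl; lia.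
  - apply Forall_app; auto.
  - apply Forall_app; auto.
  - rewrite csubst_apps. rewrite rev_app_distr. simpl.
    rewrite Nat.sub_0_r. replace (g - i <? S (length (rev cases))) with true.
    2:{ symmetry. apply Nat.ltb_lt. rewrite length_rev. lia. }
    destruct (g - i) eqn:E. lia.
    f_equal.
    + rewrite rev_nth by lia. rewrite Hl. replace (g - S n) with i by lia. apply nth_indep. lia.
    + rewrite map_map. apply map_ext_in. intros a Ha. apply csubst_closed.
      apply closed_any. apply scott_closed. rewrite Forall_forall in Hw; auto.
Qed.

Lemma lbot_case cases d : length cases = g -> Forall closed cases -> Forall is_value cases ->
  closed d -> is_value d -> iter bv (S g) (apps (lbot g) (cases ++ [d])) d.
Proof.
  intros Hl Hc Hv Hcd Hvd. unfold lbot.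
  eapply iter_eq_r. apply beta_lams.
  - rewrite length_app; simpl; lia.
  - apply Forall_app; auto.
  - apply Forall_app; auto.
  - rewrite rev_app_distr. simpl. auto.
Qed.

Definition branches (body : nat -> lterm) (D : nat) : list lterm :=
  map (fun j => lams (car j) (Lam (body j))) (seq 0 g).

Lemma branches_closed body D : (forall j, j < g -> closed_at (D + car j + 1) (body j)) ->
  Forall (closed_at D) (branches body D).
Proof.
  intros H. unfold branches. rewrite Forall_map, Forall_forall. intros j Hj.
  apply in_seq in Hj. apply closed_at_lams. simpl. replace (S (D + car j)) with (D + car j + 1) by lia.
  apply H; lia.
Qed.

Lemma csubst_branches body D env : length env = D -> Forall closed env ->
  map (csubst 0 env) (branches body D) = branches (fun j => csubst (car j + 1) env (body j)) 0.
Proof.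
  intros HD Hc. unfold branches. rewrite map_map. apply map_ext. intro j.
  rewrite csubst_lams. simpl. f_equal. f_equal. f_equal. lia.
Qed.

Lemma branches_values body D : Forall is_value (branches body D).
Proof. unfold branches. rewrite Forall_map, Forall_forall. intros. destruct (car x); simpl; auto. Qed.

Lemma nth_branches body D j d : j < g -> nth j (branches body D) d = lams (car j) (Lam (body j)).
Proof. intro Hj. unfold branches. apply (nth_map_seq (fun j => lams (car j) (Lam (body j)))); auto. Qed.

Lemma csubst_comp3 lev ws C : Forall closed lev -> Forall closed ws ->
  csubst 0 [lid] (csubst 1 (rev ws) (csubst (length ws + 1) (rev lev) C)) = csubst 0 (rev (lev ++ ws ++ [lid])) C.
Proof.
  intros H1 H2.
  replace (length ws + 1) with (1 + length (rev ws)) by (rewrite length_rev; lia).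
  rewrite (csubst_comp C 1 (rev ws) (rev lev)) by (apply Forall_rev; auto).
  rewrite (csubst_comp _ 0 [lid]).
  - rewrite !rev_app_distr. simpl. auto.
  - constructor; [apply lid_closed|constructor].
  - apply Forall_app; split; apply Forall_rev; auto.
Qed.

(* Scott case analysis on the value at level [l]: branch [j] receives the fields and then
   the dummy argument [lid], which also unfreezes the default branch [Lam dfl], taken
   when the value is [lbot g]. *)
Definition case_sel (D l : nat) (body : nat -> lterm) (dfl : lterm) : lterm :=
  App (apps (lvar D l) (branches body D ++ [Lam dfl])) lid.

Lemma case_sel_closed D l body dfl : l < D -> (forall j, j < g -> closed_at (D + car j + 1) (body j)) ->
  closed_at (S D) dfl -> closed_at D (case_sel D l body dfl).
Proof.
  intros Hl Hb Hd. unfold case_sel. simpl. split; [|simpl; lia].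
  apply closed_at_apps. split. unfold lvar; simpl; lia.
  apply Forall_app. split. apply branches_closed. auto. constructor; auto.
Qed.

Lemma case_sel_scott body dfl D l lev v : length lev = D -> Forall closed lev -> l < D ->
  nth l lev lid = scott g v -> cterm v -> (forall j, j < g -> closed_at (D + car j + 1) (body j)) ->
  closed_at (S D) dfl ->
  exists j ws, v = Con j ws /\ j < g /\ length ws = car j /\ Forall cterm ws /\
    iter bv (S g + (car j + 1)) (csubst 0 (rev lev) (case_sel D l body dfl))
      (csubst 0 (rev (lev ++ map (scott g) ws ++ [lid])) (body j)).
Proof.
  intros HD Hc Hl Hn Hv Hb Hd.
  destruct v as [|j ws|]; [destruct Hv| |destruct Hv].
  apply cterm_con in Hv. destruct Hv as [Hj [Hlen Hws]].
  exists j, ws. repeat split; auto.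
  assert (Hsc : Forall closed (map (scott g) ws)).
  { rewrite Forall_map. rewrite Forall_forall in *. intros; apply scott_closed; auto. }
  unfold case_sel. simpl csubst at 1. rewrite csubst_apps, map_app. rewrite csubst_lvar by auto. rewrite Hn.
  rewrite csubst_branches by (rewrite ?length_rev; auto; apply Forall_rev; auto).
  change (Lam (LVar 0)) with lid.
  set (dfl' := csubst 0 (rev lev) (Lam dfl)).
  replace (map (csubst 0 (rev lev)) [Lam dfl]) with [dfl'] by reflexivity.
  assert (Hdc : closed dfl').
  { unfold dfl'. apply closed_csubst. rewrite length_rev, HD. simpl. auto. apply Forall_rev; auto. }
  apply iter_trans
    with (y := App (apps (nth j (branches (fun j0 => csubst (car j0 + 1) (rev lev) (body j0)) 0) dfl')
                         (map (scott g) ws)) lid).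
  { apply iter_appl. apply scott_case; auto.
    - unfold branches. rewrite length_map, length_seq; auto.
    - pose proof (branches_closed (fun j0 => csubst (car j0 + 1) (rev lev) (body j0)) 0) as Hcc.
      apply Hcc. intros j0 Hj0. simpl. apply closed_csubst. rewrite length_rev. rewrite HD.
      replace (car j0 + 1 + D) with (D + car j0 + 1) by lia. apply Hb; lia.
      apply Forall_rev; auto.
    - apply branches_values.
    - unfold dfl'; simpl; auto. }
  rewrite nth_branches by auto.
  apply iter_trans with (y := App (csubst 0 (rev (map (scott g) ws)) (Lam (csubst (car j + 1) (rev lev) (body j)))) lid).
  { apply iter_appl. apply beta_lams. rewrite length_map; auto. auto.
    rewrite Forall_map, Forall_forall. intros. apply scott_value. rewrite Forall_forall in Hws; auto. }
  simpl csubst. apply iter_one. eapply bv_eq_r. constructor. simpl; auto.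
  unfold lsubst. rewrite substk_csubst by apply lid_closed.
  rewrite <- csubst_comp3; auto. rewrite length_map, Hlen. auto.
Qed.

Lemma case_sel_bot body dfl D l lev : length lev = D -> Forall closed lev -> l < D ->
  nth l lev lid = lbot g -> (forall j, j < g -> closed_at (D + car j + 1) (body j)) ->
  closed_at (S D) dfl ->
  iter bv (S g + 1) (csubst 0 (rev lev) (case_sel D l body dfl)) (csubst 0 (rev (lev ++ [lid])) dfl).
Proof.
  intros HD Hc Hl Hn Hb Hd.
  unfold case_sel. simpl csubst at 1. rewrite csubst_apps, map_app. rewrite csubst_lvar by auto. rewrite Hn.
  rewrite csubst_branches by (rewrite ?length_rev; auto; apply Forall_rev; auto).
  change (Lam (LVar 0)) with lid.
  set (dfl' := csubst 0 (rev lev) (Lam dfl)).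
  replace (map (csubst 0 (rev lev)) [Lam dfl]) with [dfl'] by reflexivity.
  assert (Hdc : closed dfl').
  { unfold dfl'. apply closed_csubst. rewrite length_rev, HD. simpl. auto. apply Forall_rev; auto. }
  apply iter_trans with (y := App dfl' lid).
  { apply iter_appl. apply lbot_case; auto.
    - unfold branches. rewrite length_map, length_seq; auto.
    - apply (branches_closed (fun j0 => csubst (car j0 + 1) (rev lev) (body j0)) 0).
      intros j0 Hj0. simpl. apply closed_csubst. rewrite length_rev, HD.
      replace (car j0 + 1 + D) with (D + car j0 + 1) by lia. apply Hb; lia.
      apply Forall_rev; auto.
    - apply branches_values.
    - unfold dfl'; simpl; auto. }
  apply iter_one. eapply bv_eq_r. constructor. simpl; auto.
  unfold lsubst. rewrite substk_csubst by apply lid_closed.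
  rewrite rev_app_distr. apply (csubst_comp dfl 0 [lid] (rev lev)).
  - constructor; [apply lid_closed|constructor].
  - apply Forall_rev; auto.
Qed.

(* Forcing the values at levels [ls]: an argument equal to [lbot g] makes the result
   [lbot g]; this is how errors propagate through strict calls. *)
Fixpoint force_args (ls : list nat) (cont : nat -> lterm) (D : nat) : lterm :=
  match ls with
  | [] => cont D
  | l :: ls => case_sel D l (fun j => force_args ls cont (D + car j + 1)) (lbot g)
  end.

Lemma force_args_closed : forall ls cont D, Forall (fun l => l < D) ls ->
  (forall D', D <= D' -> closed_at D' (cont D')) -> closed_at D (force_args ls cont D).
Proof.
  induction ls; simpl; intros cont D Hl Hc. apply Hc; lia.
  inversion Hl; subst. apply case_sel_closed; auto.
  - intros j _. apply IHls; [|intros; apply Hc; lia].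
    eapply Forall_impl; [|exact H2]. simpl; intros; lia.
  - change (closed_at (S D) (lbot g)). apply closed_any, lbot_closed.
Qed.

Definition arg_ok (lev : list lterm) (D : nat) (l : nat) (o : option term) :=
  l < D /\ nth l lev lid = encode o /\ outcome_wf o.

Lemma arg_ok_ext lev ext D D' l o : D <= D' -> length lev = D -> arg_ok lev D l o -> arg_ok (lev ++ ext) D' l o.
Proof. intros H1 H2 [H3 [H4 H5]]. repeat split; auto. lia. rewrite app_nth1 by lia. auto. Qed.

Lemma force_args_spec : forall ls os cont D lev, length lev = D -> Forall closed lev ->
  Forall2 (arg_ok lev D) ls os -> (forall D', D <= D' -> closed_at D' (cont D')) ->
  (forall vs, all_some os = Some vs -> exists j ext, j <= sel_cost * length ls /\ Forall closed ext /\
      iter bv j (csubst 0 (rev lev) (force_args ls cont D)) (csubst 0 (rev (lev ++ ext)) (cont (D + length ext)))) /\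
  (all_some os = None -> exists j, iter bv j (csubst 0 (rev lev) (force_args ls cont D)) (lbot g)).
Proof.
  intros ls; induction ls as [|l ls IH]; intros os0 cont D lev HD Hc HF0 Hcont;
    (destruct os0 as [|o os]; try (inversion HF0; fail)).
  - simpl. split; [|discriminate]. intros vs _. exists 0, [].
    rewrite app_nil_r, Nat.add_0_r. repeat split; [lia|constructor|constructor].
  - assert (Hlo : arg_ok lev D l o /\ Forall2 (arg_ok lev D) ls os) by (inversion HF0; auto).
    destruct Hlo as [Hlo HF].
    assert (Hcl : forall D', D <= D' -> closed_at D' (force_args ls cont D')).
    { intros D' HD'. apply force_args_closed. rewrite Forall_forall. intros x Hx.
      destruct (Forall2_In_l _ _ _ _ HF Hx) as [o' [_ [H _]]]. lia. intros; apply Hcont; lia. }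
    assert (Hbot : closed_at (S D) (lbot g)) by apply closed_any, lbot_closed.
    destruct Hlo as [Hl [Hn Hok]]. destruct o as [v|].
    + destruct (case_sel_scott (fun j => force_args ls cont (D + car j + 1)) (lbot g) D l lev v
                  HD Hc Hl Hn (Hok v eq_refl) ltac:(intros; apply Hcl; lia) Hbot)
        as [j [ws [-> [Hj [Hlen [Hws Hit]]]]]].
      set (lev1 := lev ++ map (scott g) ws ++ [lid]).
      assert (HF1 : Forall2 (arg_ok lev1 (D + car j + 1)) ls os).
      { eapply Forall2_impl; [|exact HF]. intros. apply arg_ok_ext with (D := D); auto. lia. }
      pose proof (scott_env_closed ws Hws) as Hc1.
      assert (HD1 : length lev1 = D + car j + 1).
      { unfold lev1. rewrite !length_app, length_map. simpl. lia. }
      destruct (IH os cont (D + car j + 1) lev1 HD1 ltac:(apply Forall_app; auto) HF1 ltac:(intros; apply Hcont; lia)) as [IH1 IH2].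
      split.
      * intros vs E. simpl in E. destruct (all_some os) as [vs'|] eqn:E2; [|discriminate].
        destruct (IH1 vs' eq_refl) as [j' [ext [Hj' [Hce Hit']]]].
        exists (S g + (car j + 1) + j'), ((map (scott g) ws ++ [lid]) ++ ext). repeat split.
        -- change (length (l :: ls)) with (S (length ls)). rewrite Nat.mul_succ_r.
           pose proof (car_le_total j Hj). unfold sel_cost in *. lia.
        -- apply Forall_app; auto.
        -- eapply iter_trans. exact Hit. eapply iter_eq_r. exact Hit'. unfold lev1.
           rewrite <- (app_assoc lev). f_equal. f_equal. rewrite !length_app, length_map; simpl. lia.
      * intros E. simpl in E. destruct (all_some os) as [vs'|] eqn:E2; [discriminate|].
        destruct (IH2 eq_refl) as [j' Hit']. exists (S g + (car j + 1) + j'). eapply iter_trans; eauto.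
    + split; [intros vs E; simpl in E; discriminate|]. intros _.
      exists (S g + 1). eapply iter_eq_r. apply case_sel_bot; auto.
      * intros; apply Hcl; lia.
      * apply csubst_closed, closed_any, lbot_closed.
Qed.

Lemma arg_ok_seq : forall os k lev D, (forall i, i < length os -> nth (k + i) lev lid = encode (nth i os None)) ->
  k + length os <= D -> Forall outcome_wf os -> Forall2 (arg_ok lev D) (seq k (length os)) os.
Proof.
  induction os as [|o os IH]; simpl; intros k lev D Hn HD Hok; constructor.
  - inversion Hok; subst. repeat split; auto. lia. specialize (Hn 0). rewrite Nat.add_0_r in Hn. apply Hn; lia.
  - inversion Hok; subst. apply IH; auto; [|lia]. intros i Hi. replace (S k + i) with (k + S i) by lia. apply (Hn (S i)). lia.
Qed.

(* Constructors are compiled as strict functions: [con_code i] forces its arguments and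
   rebuilds the Scott value from them. *)
Definition con_build (i D : nat) := lams (S g) (apps (LVar (g - i)) (map (fun l => LVar (D + g - l)) (seq 0 (car i)))).
Definition con_code i := lams (car i) (force_args (seq 0 (car i)) (con_build i) (car i)).

Lemma con_build_closed i D : car i <= D -> closed_at D (con_build i D).
Proof.
  intro H. unfold con_build. apply closed_at_lams. apply closed_at_apps. split. simpl; lia.
  rewrite Forall_map, Forall_forall. intros l Hl. apply in_seq in Hl. simpl. lia.
Qed.

Lemma con_code_closed i : closed (con_code i).
Proof.
  unfold con_code, closed. apply closed_at_lams. simpl. apply force_args_closed.
  rewrite Forall_forall. intros l Hl. apply in_seq in Hl. lia.
  intros; apply con_build_closed; auto.
Qed.

Lemma con_build_scott i vs ext : length vs = car i -> Forall closed ext -> Forall cterm vs ->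
  csubst 0 (rev (map (scott g) vs ++ ext)) (con_build i (car i + length ext)) = scott g (Con i vs).
Proof.
  intros Hl Hc Hv. unfold con_build. rewrite csubst_lams. simpl (0 + S g).
  unfold scott; fold (scott g). f_equal. rewrite csubst_apps. f_equal.
  - simpl. destruct (g - i <? S g) eqn:E; auto. apply Nat.ltb_ge in E; lia.
  - rewrite map_map.
    transitivity (map (fun l => nth l (map (scott g) vs) (LVar 0)) (seq 0 (car i))).
    2:{ rewrite <- Hl at 1. rewrite <- (length_map (scott g) vs). apply map_nth_seq_length. }
    apply map_ext_in. intros l Hin. apply in_seq in Hin.
    simpl. destruct (car i + length ext + g - l <? S g) eqn:E; [apply Nat.ltb_lt in E; lia|].
    rewrite length_rev, length_app, length_map.
    destruct (car i + length ext + g - l - S g <? length vs + length ext) eqn:E2; [|apply Nat.ltb_ge in E2; lia].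
    rewrite rev_nth by (rewrite length_app, length_map; lia).
    rewrite length_app, length_map. rewrite app_nth1 by (rewrite length_map; lia). f_equal. lia.
Qed.

Definition con_cost := car_total + sel_cost * car_total.

Lemma encode_some vs : map encode (map Some vs) = map (scott g) vs.
Proof. rewrite map_map. auto. Qed.

Lemma con_code_spec i os : i < g -> length os = car i -> Forall outcome_wf os ->
  exists j, iter bv j (apps (con_code i) (map encode os)) (encode (option_map (Con i) (all_some os))) /\
    (all_some os <> None -> j <= con_cost).
Proof.
  intros Hi Hl Hok.
  assert (Hcl : Forall closed (map encode os)).
  { rewrite Forall_map. eapply Forall_impl; [|exact Hok]. apply encode_closed. }
  assert (Hbeta : iter bv (car i) (apps (con_code i) (map encode os))
                    (csubst 0 (rev (map encode os)) (force_args (seq 0 (car i)) (con_build i) (car i)))).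
  { apply beta_lams. rewrite length_map; auto. auto. rewrite Forall_map. eapply Forall_impl; [|exact Hok]. apply encode_value. }
  assert (HF : Forall2 (arg_ok (map encode os) (car i)) (seq 0 (car i)) os).
  { rewrite <- Hl. apply arg_ok_seq; auto. intros k Hk. simpl.
    rewrite nth_indep with (d' := encode None) by (rewrite length_map; auto). apply map_nth. }
  destruct (force_args_spec (seq 0 (car i)) os (con_build i) (car i) (map encode os) ltac:(rewrite length_map; auto) Hcl HF
     ltac:(intros; apply con_build_closed; auto)) as [H1 H2].
  destruct (all_some os) as [vs|] eqn:E.
  - destruct (H1 vs eq_refl) as [j [ext [Hj [Hce Hit]]]].
    exists (car i + j). split.
    + eapply iter_trans. exact Hbeta. eapply iter_eq_r. exact Hit.
      apply all_some_spec in E. subst os. rewrite encode_some. simpl.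
      rewrite length_map in Hl. apply con_build_scott; auto.
      rewrite Forall_map in Hok. eapply Forall_impl; [| exact Hok]. intros a Ha. apply Ha; auto.
    + intros _. rewrite length_seq in Hj. unfold con_cost. pose proof (car_le_total i Hi). nia.
  - destruct (H2 eq_refl) as [j Hit]. exists (car i + j). split.
    + eapply iter_trans. exact Hbeta. exact Hit.
    + intro C; exfalso; apply C; auto.
Qed.

Fixpoint pat_size (t : term) : nat :=
  match t with Var _ => 1 | Con _ ts => S (list_sum (map pat_size ts)) | Fun _ ts => S (list_sum (map pat_size ts)) end.

Definition items_size (its : list (term * nat)) := list_sum (map (fun it => pat_size (fst it)) its).

(* [match_code fu its vm succ fail D] matches each pattern [p] of a pair [(p, l)] in [its]
   against the value at level [l], recording in [vm] the level of each pattern variable.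
   The list [its] grows when a constructor pattern is opened, so recursion is on the fuel
   [fu]; [items_size its < fu] is enough. *)
Fixpoint match_code (fu : nat) (its : list (term * nat)) (vm : nat -> nat)
  (succ : nat -> (nat -> nat) -> lterm) (fail : nat -> lterm) (D : nat) {struct fu} : lterm :=
  match fu with
  | 0 => fail D
  | S fu =>
    match its with
    | [] => succ D vm
    | (Var y, l) :: rest => match_code fu rest (fun x => if x =? y then l else vm x) succ fail D
    | (Con i ps, l) :: rest =>
        case_sel D l (fun j => if j =? i then match_code fu (combine ps (seq D (car j)) ++ rest) vm succ fail (D + car j + 1)
                           else fail (D + car j + 1)) (fail (D + 1))
    | (Fun _ _, _) :: _ => fail D
    end
  end.

Lemma items_size_cons p l rest : items_size ((p, l) :: rest) = pat_size p + items_size rest.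
Proof. reflexivity. Qed.

Lemma items_size_app a b : items_size (a ++ b) = items_size a + items_size b.
Proof. unfold items_size. rewrite map_app, list_sum_app. auto. Qed.

Lemma items_size_combine : forall ps ls, length ps = length ls -> items_size (combine ps ls) = list_sum (map pat_size ps).
Proof. induction ps; destruct ls; simpl; intros; try discriminate; auto. unfold items_size in *. simpl. rewrite IHps; auto. Qed.

Definition item_ok lev D (it : term * nat) (w : term) :=
  snd it < D /\ nth (snd it) lev lid = scott g w /\ cterm w /\ is_pattern g car (fst it).

Lemma item_ok_ext lev ext D D' it w : D <= D' -> length lev = D -> item_ok lev D it w -> item_ok (lev ++ ext) D' it w.
Proof. intros H1 H2 [H3 [H4 H5]]. split. lia. split; auto. rewrite app_nth1 by lia. auto. Qed.

Lemma item_ok_combine lev1 : forall ps ws D D1, length ps = length ws -> Forall (is_pattern g car) ps -> Forall cterm ws ->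
  D + length ps <= D1 -> (forall k, k < length ws -> nth (D + k) lev1 lid = scott g (nth k ws (Var 0))) ->
  Forall2 (item_ok lev1 D1) (combine ps (seq D (length ps))) ws.
Proof.
  induction ps as [|p ps IH]; destruct ws as [|w ws]; simpl; intros D D1 Hl Hp Hw HD Hn; try discriminate; constructor.
  - inversion Hp; inversion Hw; subst. repeat split; simpl; auto. lia. specialize (Hn 0). rewrite Nat.add_0_r in Hn. apply Hn; lia.
  - inversion Hp; inversion Hw; subst. apply IH; auto; try lia.
    intros k Hk. replace (S D + k) with (D + S k) by lia. apply (Hn (S k)); lia.
Qed.

Section MatchCode.
Variables (succ : nat -> (nat -> nat) -> lterm) (fail : nat -> lterm) (D0 : nat).
Hypothesis Hsucc : forall D vm, D0 <= D -> (forall y, vm y < D) -> closed_at D (succ D vm).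
Hypothesis Hfail : forall D, D0 <= D -> closed_at D (fail D).

Lemma match_code_closed : forall fu its vm D, D0 <= D -> Forall (fun it => snd it < D) its ->
  (forall y, vm y < D) -> closed_at D (match_code fu its vm succ fail D).
Proof.
  induction fu; intros its vm D HD Hit Hvm; simpl. apply Hfail; auto.
  destruct its as [|[p l] rest]. apply Hsucc; auto.
  inversion Hit; subst. simpl in H1.
  destruct p as [y|i ps|f ps].
  - apply IHfu; auto. intro x. destruct (x =? y); auto.
  - apply case_sel_closed; auto.
    + intros j Hj. destruct (j =? i); [|apply Hfail; lia].
      apply IHfu; [lia| |intros y; specialize (Hvm y); lia]. apply Forall_app. split.
      * rewrite Forall_forall. intros [p l'] Hin. apply in_combine_r, in_seq in Hin. simpl. lia.
      * eapply Forall_impl; [|exact H2]. simpl. intros; lia.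
    + replace (S D) with (D + 1) by lia. apply Hfail; lia.
  - apply Hfail; auto.
Qed.

(* The matcher run from code [M] either finds the matching substitution, reaching [succ]
   with an extended environment in which [vm'] locates every pattern variable, or it
   reaches [fail]; either way in at most [sel_cost] steps per pattern symbol. *)
Definition match_result its ws vm D lev M : Prop :=
  ((exists sg, map (tsubst sg) (map fst its) = ws) /\
   exists j ext vm', j <= sel_cost * items_size its /\ Forall closed ext /\ (forall y, vm' y < D + length ext) /\
     iter bv j (csubst 0 (rev lev) M) (csubst 0 (rev (lev ++ ext)) (succ (D + length ext) vm')) /\
     (forall sg, map (tsubst sg) (map fst its) = ws -> forall y, In y (flat_map vars (map fst its)) ->
        nth (vm' y) (lev ++ ext) lid = scott g (sg y)) /\
     (forall y, ~ In y (flat_map vars (map fst its)) -> vm' y = vm y))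
  \/
  ((~ exists sg, map (tsubst sg) (map fst its) = ws) /\
   exists j ext, j <= sel_cost * items_size its /\ Forall closed ext /\
     iter bv j (csubst 0 (rev lev) M) (csubst 0 (rev (lev ++ ext)) (fail (D + length ext)))).

Lemma match_result_nil vm D lev : (forall y, vm y < D) -> match_result [] [] vm D lev (succ D vm).
Proof.
  intro Hvm. left. split. exists (fun _ => Var 0); auto.
  exists 0, [], vm. rewrite app_nil_r, Nat.add_0_r. repeat split; auto; [lia|constructor|intros _ _ y []].
Qed.

Lemma match_result_var y l rest w wrest vm D lev M : length lev = D -> l < D ->
  nth l lev lid = scott g w -> ~ In y (flat_map vars (map fst rest)) ->
  match_result rest wrest (fun x => if x =? y then l else vm x) D lev M ->
  match_result ((Var y, l) :: rest) (w :: wrest) vm D lev M.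
Proof.
  intros HD Hl Hn Hny [[[sg Hsg] [j [ext [vm' [Hj [Hce [Hvm' [Hit [Hb Ho]]]]]]]]]|[Hno [j [ext [Hj [Hce Hit]]]]]];
    unfold match_result; rewrite items_size_cons; simpl pat_size.
  - left. split.
    { exists (fun x => if x =? y then w else sg x). simpl. f_equal. rewrite Nat.eqb_refl; auto.
      rewrite <- Hsg. apply map_ext_in. intros a Ha. apply tsubst_ext. intros x Hx.
      destruct (x =? y) eqn:E; auto. apply Nat.eqb_eq in E. subst. exfalso. apply Hny.
      apply in_flat_map. eauto. }
    exists j, ext, vm'. repeat split; auto. lia.
    + intros sg' Hsg' x Hx. simpl in Hsg'. injection Hsg' as E1 E2.
      simpl in Hx. destruct Hx as [<-|Hx].
      * rewrite Ho by auto. rewrite Nat.eqb_refl, app_nth1 by lia. congruence.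
      * apply Hb; auto.
    + intros x Hx. rewrite Ho by (intro; apply Hx; simpl; auto).
      destruct (x =? y) eqn:E; auto. apply Nat.eqb_eq in E; subst. exfalso; apply Hx; simpl; auto.
  - right. split.
    { intros [sg Hsg]. apply Hno. exists sg. simpl in Hsg. injection Hsg; auto. }
    exists j, ext. repeat split; auto. lia.
Qed.

Lemma match_result_con_hit j ps l rest ws wrest vm D lev M M' c :
  length ps = car j -> length ws = car j -> c <= sel_cost -> Forall cterm ws ->
  iter bv c (csubst 0 (rev lev) M) (csubst 0 (rev (lev ++ map (scott g) ws ++ [lid])) M') ->
  match_result (combine ps (seq D (car j)) ++ rest) (ws ++ wrest) vm (D + car j + 1)
    (lev ++ map (scott g) ws ++ [lid]) M' ->
  match_result ((Con j ps, l) :: rest) (Con j ws :: wrest) vm D lev M.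
Proof.
  intros Hlp Hlw Hc Hws Hsel Hres.
  set (its := combine ps (seq D (car j)) ++ rest) in *.
  assert (Hmf : map fst its = ps ++ map fst rest).
  { unfold its. rewrite map_app, map_fst_combine; auto. rewrite length_seq; auto. }
  assert (Hsz : items_size ((Con j ps, l) :: rest) = S (items_size its)).
  { unfold its. rewrite items_size_app, items_size_combine by (rewrite length_seq; auto). reflexivity. }
  assert (Hmatch : forall sg, map (tsubst sg) (map fst ((Con j ps, l) :: rest)) = Con j ws :: wrest ->
            map (tsubst sg) (map fst its) = ws ++ wrest).
  { intros sg E. simpl in E. injection E as E1 E2. rewrite Hmf, map_app. congruence. }
  assert (Hext : forall ext, length ((map (scott g) ws ++ [lid]) ++ ext) = car j + 1 + length ext)
    by (intro; rewrite !length_app, length_map; simpl; lia).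
  unfold match_result in *. rewrite Hmf in Hres. rewrite Hsz.
  destruct Hres as [[[sg Hsg] [j' [ext [vm' [Hj' [Hce [Hvm' [Hit [Hb Ho]]]]]]]]]|[Hno [j' [ext [Hj' [Hce Hit]]]]]].
  - left. split.
    { exists sg. rewrite map_app in Hsg. apply app_inj_length in Hsg; [|rewrite length_map; congruence].
      destruct Hsg as [E1 E2]. simpl. rewrite E1, E2. auto. }
    exists (c + j'), ((map (scott g) ws ++ [lid]) ++ ext), vm'. repeat split.
    + rewrite Nat.mul_succ_r. lia.
    + apply Forall_app; split; auto. apply scott_env_closed; auto.
    + intros y. specialize (Hvm' y). rewrite Hext. lia.
    + eapply iter_trans. exact Hsel. eapply iter_eq_r. exact Hit.
      rewrite <- (app_assoc lev), Hext. f_equal. f_equal. lia.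
    + intros sg' Hsg' y Hy. rewrite <- (app_assoc lev) in Hb. apply Hb.
      * rewrite <- Hmf. apply Hmatch; auto.
      * rewrite flat_map_app. exact Hy.
    + intros y Hy. apply Ho. rewrite flat_map_app. exact Hy.
  - right. split.
    { intros [sg Hsg]. apply Hno. exists sg. rewrite <- Hmf. apply Hmatch; auto. }
    exists (c + j'), ((map (scott g) ws ++ [lid]) ++ ext). repeat split.
    + rewrite Nat.mul_succ_r. lia.
    + apply Forall_app; split; auto. apply scott_env_closed; auto.
    + eapply iter_trans. exact Hsel. eapply iter_eq_r. exact Hit.
      rewrite <- (app_assoc lev), Hext. f_equal. f_equal. lia.
Qed.

Lemma match_result_con_miss i j ps l rest ws wrest vm D lev M ext c : j <> i -> c <= sel_cost ->
  Forall closed ext -> iter bv c (csubst 0 (rev lev) M) (csubst 0 (rev (lev ++ ext)) (fail (D + length ext))) ->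
  match_result ((Con i ps, l) :: rest) (Con j ws :: wrest) vm D lev M.
Proof.
  intros Hne Hc Hce Hit. right. split.
  - intros [sg Hsg]. simpl in Hsg. injection Hsg as E1 E2. auto.
  - exists c, ext. repeat split; auto.
    unfold items_size. simpl. nia.
Qed.

Lemma match_code_spec : forall fu its ws vm D lev, items_size its < fu -> D0 <= D ->
  length lev = D -> Forall closed lev -> Forall2 (item_ok lev D) its ws ->
  NoDup (flat_map vars (map fst its)) -> (forall y, vm y < D) ->
  match_result its ws vm D lev (match_code fu its vm succ fail D).
Proof.
  induction fu as [|fu IH]; intros its ws vm D lev Hfu HD0 HD Hc HF Hnd Hvm. lia.
  destruct its as [|[p l] rest]; [inversion HF; apply match_result_nil; auto|].
  destruct ws as [|w wrest]; [inversion HF|].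
  assert (Hit : item_ok lev D (p, l) w /\ Forall2 (item_ok lev D) rest wrest) by (inversion HF; auto).
  destruct Hit as [[Hl [Hn [Hw Hp]]] HF']. simpl fst in *. simpl snd in *.
  pose proof (items_size_cons p l rest) as Hms.
  destruct p as [y|i ps|f ps]; [| |destruct Hp].
  - simpl in Hnd. apply NoDup_cons_iff in Hnd. destruct Hnd as [Hny Hnd].
    apply match_result_var; auto. apply IH; auto. simpl in Hms; lia.
    intro x. destruct (x =? y); auto.
  - apply pattern_con in Hp. destruct Hp as [Hi [Hlp Hps]].
    destruct (case_sel_scott (fun j => if j =? i then match_code fu (combine ps (seq D (car j)) ++ rest) vm succ fail (D + car j + 1)
                                       else fail (D + car j + 1)) (fail (D + 1)) D l lev w HD Hc Hl Hn Hw)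
      as [j [ws' [-> [Hj [Hlw [Hws' Hsel]]]]]].
    { intros j Hj. destruct (j =? i); [|apply Hfail; lia].
      apply match_code_closed; [lia| |intros y; specialize (Hvm y); lia]. apply Forall_app. split.
      + rewrite Forall_forall. intros [p' l'] Hin. apply in_combine_r, in_seq in Hin. simpl. lia.
      + rewrite Forall_forall. intros it Hin. destruct (Forall2_In_l _ _ _ _ HF' Hin) as [? [_ [? _]]]. lia. }
    { replace (S D) with (D + 1) by lia. apply Hfail; lia. }
    assert (HCK : S g + (car j + 1) <= sel_cost) by (pose proof (car_le_total j Hj); unfold sel_cost; lia).
    simpl match_code. destruct (Nat.eq_dec j i) as [<-|Hne].
    + rewrite Nat.eqb_refl in Hsel. eapply match_result_con_hit; eauto.
      assert (HF1 : Forall2 (item_ok (lev ++ map (scott g) ws' ++ [lid]) (D + car j + 1))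
                      (combine ps (seq D (car j)) ++ rest) (ws' ++ wrest)).
      { apply Forall2_app.
        - rewrite <- Hlp. apply item_ok_combine; auto; try lia.
          intros k Hk. rewrite app_nth2 by lia. replace (D + k - length lev) with k by lia.
          rewrite app_nth1 by (rewrite length_map; lia).
          rewrite nth_indep with (d' := scott g (Var 0)) by (rewrite length_map; lia). apply map_nth.
        - eapply Forall2_impl; [|exact HF']. intros. apply item_ok_ext with (D := D); auto. lia. }
      apply IH; auto; try lia.
      * rewrite items_size_app, items_size_combine by (rewrite length_seq; auto). simpl in Hms. lia.
      * rewrite !length_app, length_map; simpl; lia.
      * apply Forall_app; split; auto. apply scott_env_closed; auto.
      * rewrite map_app, map_fst_combine, flat_map_app by (rewrite length_seq; auto). exact Hnd.
      * intro y; specialize (Hvm y); lia.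
    + apply Nat.eqb_neq in Hne. rewrite Hne in Hsel. apply Nat.eqb_neq in Hne.
      eapply match_result_con_miss with (c := S g + (car j + 1)) (ext := map (scott g) ws' ++ [lid]); eauto.
      * apply scott_env_closed; auto.
      * eapply iter_eq_r. exact Hsel. f_equal. f_equal. rewrite length_app, length_map; simpl; lia.
Qed.
End MatchCode.

(* Right-hand sides run in an environment whose levels [0 .. h-1] hold the codes of all
   function symbols; this is how function codes call each other without a fixed-point
   combinator. *)
Fixpoint code_term (vm : nat -> nat) (D : nat) (t : term) : lterm :=
  match t with
  | Var x => lvar D (vm x)
  | Con i ts => apps (con_code i) (map (code_term vm D) ts)
  | Fun f ts => apps (apps (lvar D f) (map (lvar D) (seq 0 h))) (map (code_term vm D) ts)
  end.

Definition arg_items (r : rule) (f : nat) := combine (rpats r) (seq h (far f)).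

Fixpoint try_rules (rls : list rule) (f : nat) (D : nat) : lterm :=
  match rls with
  | [] => lbot g
  | r :: rls' => match_code (S (items_size (arg_items r f))) (arg_items r f) (fun _ => 0)
                   (fun D' vm => code_term vm D' (rrhs r)) (fun D' => try_rules rls' f D') D
  end.

Definition rules_for (f : nat) := filter (fun r => rfun r =? f) R.
Definition fun_body (f : nat) := force_args (seq h (far f)) (try_rules (rules_for f) f) (h + far f).
Definition fun_code (f : nat) := lams h (lams (far f) (fun_body f)).
Definition fun_codes := map fun_code (seq 0 h).
Definition Fterm (f : nat) := apps (fun_code f) fun_codes.
Definition Fterm_red (f : nat) := lams (far f) (csubst (far f) (rev fun_codes) (fun_body f)).

Lemma code_term_closed : forall t vm D, is_term g h car far t -> (forall y, vm y < D) -> h <= D ->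
  closed_at D (code_term vm D t).
Proof.
  intro t; induction t using term_ind'; intros vm D Ht Hvm Hh.
  - simpl. specialize (Hvm x). lia.
  - apply term_con in Ht. destruct Ht as [_ [_ Ht]]. simpl. apply closed_at_apps. split.
    apply closed_any, con_code_closed. rewrite Forall_map. rewrite Forall_forall in *. intros; auto.
  - apply term_fun in Ht. destruct Ht as [Hi [_ Ht]]. simpl. apply closed_at_apps. split.
    + apply closed_at_apps. split. simpl; lia. rewrite Forall_map, Forall_forall. intros x Hx.
      apply in_seq in Hx. simpl; lia.
    + rewrite Forall_map. rewrite Forall_forall in *. intros; auto.
Qed.

Lemma rules_for_spec f r : In r (rules_for f) <-> In r R /\ rfun r = f.
Proof. unfold rules_for. rewrite filter_In. rewrite Nat.eqb_eq. tauto. Qed.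

Lemma try_rules_closed f : forall rls D, f < h -> Forall (fun r => In r R /\ rfun r = f) rls -> h + far f <= D ->
  closed_at D (try_rules rls f D).
Proof.
  induction rls as [|r rls IH]; intros D Hf Hr HD; cbn [try_rules]. apply closed_any, lbot_closed.
  inversion Hr as [|? ? [Hin Hrf] Hr']; subst.
  apply (match_code_closed _ _ D).
  - intros D' vm' HD' Hvm'. apply code_term_closed; auto; [|lia].
    destruct (rule_wf r Hin) as [_ [_ [_ [? _]]]]; auto.
  - intros D' HD'. apply IH; auto. lia.
  - lia.
  - unfold arg_items. rewrite Forall_forall. intros [p l] Hpl. apply in_combine_r, in_seq in Hpl. simpl. lia.
  - intros; lia.
Qed.

Lemma fun_body_closed f : f < h -> closed_at (h + far f) (fun_body f).
Proof.
  intro Hf. unfold fun_body. apply force_args_closed.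
  - rewrite Forall_forall. intros x Hx. apply in_seq in Hx. lia.
  - intros D' HD'. apply try_rules_closed; auto. rewrite Forall_forall. intros r Hr. apply rules_for_spec; auto.
Qed.

Lemma fun_code_closed f : f < h -> closed (fun_code f).
Proof. intro Hf. unfold fun_code, closed. apply closed_at_lams. apply closed_at_lams. simpl. apply fun_body_closed; auto. Qed.

Lemma fun_codes_closed : Forall closed fun_codes.
Proof. unfold fun_codes. rewrite Forall_map, Forall_forall. intros x Hx. apply in_seq in Hx. apply fun_code_closed. lia. Qed.

Lemma fun_code_value f : f < h -> is_value (fun_code f).
Proof. intro. unfold fun_code. apply is_value_lams. lia. Qed.

Lemma fun_codes_values : Forall is_value fun_codes.
Proof. unfold fun_codes. rewrite Forall_map, Forall_forall. intros x Hx. apply in_seq in Hx. apply fun_code_value. lia. Qed.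

Lemma fun_codes_length : length fun_codes = h.
Proof. unfold fun_codes. rewrite length_map, length_seq; auto. Qed.

Lemma Fterm_reduces f : f < h -> iter bv h (Fterm f) (Fterm_red f).
Proof.
  intro Hf. unfold Fterm, fun_code. eapply iter_eq_r.
  - apply beta_lams; [apply fun_codes_length|apply fun_codes_closed|apply fun_codes_values].
  - rewrite csubst_lams. simpl. auto.
Qed.

Definition code_inv (s : nat -> term) (t : term) (D : nat) (lev : list lterm) (vm : nat -> nat) :=
  (forall x, cterm (s x)) /\ is_term g h car far t /\ length lev = D /\ h <= D /\
  (forall i, i < h -> nth i lev lid = fun_code i) /\ Forall closed lev /\ (forall y, vm y < D) /\
  (forall y, In y (vars t) -> nth (vm y) lev lid = scott g (s y)).

Lemma csubst_code_term_fun vm D lev f ts : length lev = D -> f < h -> h <= D -> (forall i, i < h -> nth i lev lid = fun_code i) ->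
  csubst 0 (rev lev) (code_term vm D (Fun f ts)) = apps (Fterm f) (map (fun t => csubst 0 (rev lev) (code_term vm D t)) ts).
Proof.
  intros HD Hf Hh HA. simpl. rewrite !csubst_apps. rewrite csubst_lvar by lia. rewrite HA by auto.
  unfold Fterm, fun_codes. rewrite !map_map. f_equal. f_equal. apply map_ext_in. intros i Hi. apply in_seq in Hi.
  rewrite csubst_lvar by lia. apply HA; lia.
Qed.

Lemma csubst_code_term_con vm D lev i ts :
  csubst 0 (rev lev) (code_term vm D (Con i ts)) = apps (con_code i) (map (fun t => csubst 0 (rev lev) (code_term vm D t)) ts).
Proof.
  simpl. rewrite csubst_apps. rewrite csubst_closed by (apply closed_any, con_code_closed). rewrite map_map. auto.
Qed.

Lemma code_inv_sub s i ts D lev vm t : code_inv s (Con i ts) D lev vm \/ code_inv s (Fun i ts) D lev vm ->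
  In t ts -> code_inv s t D lev vm.
Proof.
  intros Hinv Hin.
  assert (Hsub : is_term g h car far t /\ forall y, In y (vars t) -> In y (flat_map vars ts)).
  { destruct Hinv as [[_ [Ht _]]|[_ [Ht _]]]; [apply term_con in Ht|apply term_fun in Ht];
    destruct Ht as [_ [_ Ht]]; rewrite Forall_forall in Ht; split; auto;
    intros y Hy; apply in_flat_map; eauto. }
  destruct Hsub as [Ht Hv].
  destruct Hinv as [[H1 [_ [H3 [H4 [H5 [H6 [H7 H8]]]]]]]|[H1 [_ [H3 [H4 [H5 [H6 [H7 H8]]]]]]]];
    repeat split; auto; intros y Hy; apply H8; simpl; auto.
Qed.

Lemma code_inv_rhs r sg D lev ext vm : In r R -> (forall x, cterm (sg x)) -> length lev = D -> h <= D ->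
  (forall i, i < h -> nth i lev lid = fun_code i) -> Forall closed lev -> Forall closed ext ->
  (forall y, vm y < D + length ext) ->
  (forall y, In y (flat_map vars (rpats r)) -> nth (vm y) (lev ++ ext) lid = scott g (sg y)) ->
  code_inv sg (rrhs r) (D + length ext) (lev ++ ext) vm.
Proof.
  intros Hr Hsg HD Hh HA Hc Hce Hvm Hb. destruct (rule_wf r Hr) as [_ [_ [_ [Hrt Hrv]]]].
  unfold code_inv. repeat split; auto.
  - rewrite length_app; lia.
  - lia.
  - intros i Hi. rewrite app_nth1 by lia. auto.
  - apply Forall_app; auto.
Qed.

Definition args_env f vs D lev := length lev = D /\ Forall closed lev /\
  (forall i, i < h -> nth i lev lid = fun_code i) /\ h + far f <= D /\
  (forall k, k < far f -> nth (h + k) lev lid = scott g (nth k vs (Var 0))).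

Lemma args_env_ext f vs D lev ext : args_env f vs D lev -> Forall closed ext ->
  args_env f vs (D + length ext) (lev ++ ext).
Proof.
  intros [HD [Hc [HA [Hh Hargs]]]] Hce. repeat split.
  - rewrite length_app; lia.
  - apply Forall_app; auto.
  - intros i Hi. rewrite app_nth1 by lia. auto.
  - lia.
  - intros k Hk. rewrite app_nth1 by lia. auto.
Qed.

Definition call_env os := fun_codes ++ map encode os.

Lemma call_env_length os : length (call_env os) = h + length os.
Proof. unfold call_env. rewrite length_app, length_map, fun_codes_length. auto. Qed.

Lemma call_env_closed os : Forall outcome_wf os -> Forall closed (call_env os).
Proof.
  intro Hok. apply Forall_app. split; [apply fun_codes_closed|].
  rewrite Forall_map. eapply Forall_impl; [|exact Hok]. apply encode_closed.
Qed.

Lemma call_env_fun os i : i < h -> nth i (call_env os) lid = fun_code i.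
Proof.
  intro Hi. unfold call_env. rewrite app_nth1 by (rewrite fun_codes_length; auto).
  apply (nth_map_seq fun_code); auto.
Qed.

Lemma call_env_arg os k : k < length os -> nth (h + k) (call_env os) lid = encode (nth k os None).
Proof.
  intro Hk. unfold call_env. rewrite app_nth2 by (rewrite fun_codes_length; lia). rewrite fun_codes_length.
  replace (h + k - h) with k by lia. rewrite nth_indep with (d' := encode None) by (rewrite length_map; lia).
  apply map_nth.
Qed.

Lemma call_env_args_env f vs : length vs = far f -> Forall cterm vs ->
  args_env f vs (h + far f) (call_env (map Some vs)).
Proof.
  intros Hl Hvs. repeat split.
  - rewrite call_env_length, length_map. lia.
  - apply call_env_closed. rewrite Forall_map. eapply Forall_impl; [|exact Hvs]. intros a Ha v [= <-]. auto.
  - intros i Hi. apply call_env_fun; auto.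
  - lia.
  - intros k Hk. rewrite call_env_arg by (rewrite length_map; lia).
    rewrite nth_indep with (d' := Some (Var 0)) by (rewrite length_map; lia). rewrite map_nth. auto.
Qed.

Section DefaultConstructorTerm.
Variable c0 : term.
Hypothesis Hc0 : cterm c0.

(* Rewriting instantiates rules by total substitutions, so variables outside the
   patterns are sent to [c0]. *)
Lemma total_matching_subst r sg vs : In r R -> Forall cterm vs -> map (tsubst sg) (rpats r) = vs ->
  exists sg', (forall x, cterm (sg' x)) /\ map (tsubst sg') (rpats r) = vs.
Proof.
  intros Hr Hvs Hsg.
  exists (fun x => if in_dec Nat.eq_dec x (flat_map vars (rpats r)) then sg x else c0). split.
  - intro x. destruct (in_dec Nat.eq_dec x (flat_map vars (rpats r))) as [Hx|]; auto.
    apply in_flat_map in Hx. destruct Hx as [p [Hp Hx]].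
    apply (subst_cterm_vars p sg); auto.
    rewrite Forall_forall in Hvs. apply Hvs. rewrite <- Hsg. apply in_map; auto.
  - rewrite <- Hsg. apply map_ext_in. intros p Hp. apply tsubst_ext. intros x Hx.
    destruct (in_dec Nat.eq_dec x (flat_map vars (rpats r))) as [|Hn]; auto.
    exfalso; apply Hn. apply in_flat_map; eauto.
Qed.

Lemma try_rules_spec f vs : f < h -> length vs = far f -> Forall cterm vs ->
  forall rls D lev, args_env f vs D lev -> Forall (fun r => In r R /\ rfun r = f) rls ->
  (forall r sg, In r rls -> (forall x, cterm (sg x)) -> map (tsubst sg) (rpats r) = vs ->
     exists j D' lev' vm', j <= sel_cost * list_sum (map (fun r => items_size (arg_items r f)) rls) /\
       iter bv j (csubst 0 (rev lev) (try_rules rls f D)) (csubst 0 (rev lev') (code_term vm' D' (rrhs r))) /\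
       code_inv sg (rrhs r) D' lev' vm') /\
  ((~ exists r sg, In r rls /\ (forall x, cterm (sg x)) /\ map (tsubst sg) (rpats r) = vs) ->
     exists j, iter bv j (csubst 0 (rev lev) (try_rules rls f D)) (lbot g)).
Proof.
  intros Hf Hlv Hvs rls. induction rls as [|r1 rls IH]; intros D lev Henv Hrls;
    pose proof Henv as [HD [Hc [HA [HhD Hargs]]]].
  - split. intros r sg []. intros _. exists 0. cbn [try_rules]. rewrite csubst_closed by (apply closed_any, lbot_closed). constructor.
  - inversion Hrls as [|? ? [Hin1 Hrf1] Hrls']; subst f.
    destruct (rule_wf r1 Hin1) as [_ [Hlp [Hps [Hrt Hrv]]]].
    assert (Hmf : map fst (arg_items r1 (rfun r1)) = rpats r1).
    { unfold arg_items. apply map_fst_combine. rewrite length_seq; auto. }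
    destruct (match_code_spec (fun D' vm => code_term vm D' (rrhs r1)) (fun D' => try_rules rls (rfun r1) D') D
                ltac:(intros; apply code_term_closed; auto; lia) ltac:(intros; apply try_rules_closed; auto; lia)
                (S (items_size (arg_items r1 (rfun r1)))) (arg_items r1 (rfun r1)) vs (fun _ => 0) D lev
                ltac:(lia) ltac:(lia) HD Hc)
      as [[[sg1 Hsg1] [j [ext [vm' [Hj [Hce [Hvm' [Hit [Hb Ho]]]]]]]]]|[Hno [j [ext [Hj [Hce Hit]]]]]].
    { unfold arg_items. rewrite <- Hlp. apply item_ok_combine; auto; try lia. intros k Hk. apply Hargs. lia. }
    { rewrite Hmf. apply (rule_linear r1 Hin1). }
    { intros; lia. }
    + rewrite Hmf in *. split.
      * intros r sg Hr Hsg Em.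
        assert (r1 = r) as <-.
        { destruct Hr as [<-|Hr]; auto. rewrite Forall_forall in Hrls'. destruct (Hrls' r Hr) as [HinR Hrf].
          apply (rule_unique r1 r sg1 sg Hin1 HinR). unfold rlhs. simpl. rewrite Hrf, Hsg1, Em. auto. }
        exists j, (D + length ext), (lev ++ ext), vm'.
        split; [simpl; lia|]. split; [cbn [try_rules]; exact Hit|].
        apply code_inv_rhs; auto; lia.
      * intros Hnone. exfalso. apply Hnone.
        destruct (total_matching_subst r1 sg1 vs Hin1 Hvs Hsg1) as [sg [Hsg Em]].
        exists r1, sg. split; [left|split]; auto.
    + rewrite Hmf in *.
      destruct (IH (D + length ext) (lev ++ ext) (args_env_ext _ _ _ _ _ Henv Hce) Hrls') as [IH1 IH2].
      split.
      * intros r sg Hr Hsg Em. destruct Hr as [<-|Hr].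
        { exfalso. apply Hno. eauto. }
        destruct (IH1 r sg Hr Hsg Em) as [j' [D' [lev' [vm'' [Hj' [Hit' Hinv]]]]]].
        exists (j + j'), D', lev', vm''. split; [simpl; lia|]. split; [|exact Hinv].
        cbn [try_rules]. eapply iter_trans; eauto.
      * intros Hnone. destruct (IH2 ltac:(intros [r [sg [Hr Hrest]]]; apply Hnone; exists r, sg; split; [right|]; auto))
          as [j' Hit']. exists (j + j'). cbn [try_rules]. eapply iter_trans; eauto.
Qed.

Definition pat_size_total := list_sum (map (fun r => items_size (arg_items r (rfun r))) R).

Lemma try_rules_cost f : list_sum (map (fun r => items_size (arg_items r f)) (rules_for f)) <= pat_size_total.
Proof.
  rewrite (map_ext_in _ (fun r => items_size (arg_items r (rfun r)))).
  apply list_sum_filter. intros r Hr. apply rules_for_spec in Hr. destruct Hr as [_ ->]. auto.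
Qed.

Lemma Fterm_red_beta f os : length os = far f -> Forall outcome_wf os ->
  iter bv (far f) (apps (Fterm_red f) (map encode os)) (csubst 0 (rev (call_env os)) (fun_body f)).
Proof.
  intros Hlo Hok. unfold Fterm_red. eapply iter_eq_r. apply beta_lams.
  - rewrite length_map; auto.
  - rewrite Forall_map. eapply Forall_impl; [|exact Hok]. apply encode_closed.
  - rewrite Forall_map. eapply Forall_impl; [|exact Hok]. apply encode_value.
  - unfold call_env. rewrite rev_app_distr, <- csubst_comp, length_rev, length_map, Hlo; auto.
    + apply Forall_rev. rewrite Forall_map. eapply Forall_impl; [|exact Hok]. apply encode_closed.
    + apply Forall_rev, fun_codes_closed.
Qed.

Lemma Fterm_red_forced f os : f < h -> length os = far f -> Forall outcome_wf os ->
  (all_some os = None -> exists j, iter bv j (apps (Fterm_red f) (map encode os)) (lbot g)) /\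
  (forall vs, all_some os = Some vs -> exists j ext, j <= far f + sel_cost * far f /\ Forall closed ext /\
     iter bv j (apps (Fterm_red f) (map encode os))
       (csubst 0 (rev (call_env os ++ ext)) (try_rules (rules_for f) f (h + far f + length ext)))).
Proof.
  intros Hf Hlo Hok.
  assert (HF : Forall2 (arg_ok (call_env os) (h + far f)) (seq h (far f)) os).
  { rewrite <- Hlo. apply arg_ok_seq; auto. intros; apply call_env_arg; lia. }
  pose proof (Fterm_red_beta f os Hlo Hok) as Hbeta. unfold fun_body in Hbeta.
  destruct (force_args_spec (seq h (far f)) os (try_rules (rules_for f) f) (h + far f) (call_env os))
    as [Hc1 Hc2]; auto.
  { rewrite call_env_length; lia. }
  { apply call_env_closed; auto. }
  { intros; apply try_rules_closed; [auto|rewrite Forall_forall; intros r Hr; apply rules_for_spec; auto|lia]. }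
  split.
  - intros E. destruct (Hc2 E) as [j Hit]. exists (far f + j). eapply iter_trans; eauto.
  - intros vs E. destruct (Hc1 vs E) as [j [ext [Hj [Hce Hit]]]].
    exists (far f + j), ext. rewrite length_seq in Hj. repeat split; auto; [lia|]. eapply iter_trans; eauto.
Qed.

Lemma try_rules_for_spec f vs D lev : f < h -> length vs = far f -> Forall cterm vs -> args_env f vs D lev ->
  (forall r sg, In r R -> rfun r = f -> (forall x, cterm (sg x)) -> map (tsubst sg) (rpats r) = vs ->
     exists j D' lev' vm', j <= sel_cost * pat_size_total /\
       iter bv j (csubst 0 (rev lev) (try_rules (rules_for f) f D)) (csubst 0 (rev lev') (code_term vm' D' (rrhs r))) /\
       code_inv sg (rrhs r) D' lev' vm') /\
  (~ rule_matches f vs -> exists j, iter bv j (csubst 0 (rev lev) (try_rules (rules_for f) f D)) (lbot g)).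
Proof.
  intros Hf Hl Hvs Henv.
  destruct (try_rules_spec f vs Hf Hl Hvs (rules_for f) D lev Henv) as [T1 T2].
  { rewrite Forall_forall. intros r Hr. apply rules_for_spec; auto. }
  split.
  - intros r sg Hr Hrf Hsg Em. destruct (T1 r sg ltac:(apply rules_for_spec; auto) Hsg Em) as [j [D' [lev' [vm' [Hj H]]]]].
    exists j, D', lev', vm'. split; auto. pose proof (try_rules_cost f). nia.
  - intros Hnm. apply T2. intros [r [sg [Hr [Hsg Em]]]]. apply Hnm.
    apply rules_for_spec in Hr. destruct Hr. exists r, sg. auto.
Qed.

Lemma Fterm_red_spec f os : f < h -> length os = far f -> Forall outcome_wf os ->
  (all_some os = None -> exists j, iter bv j (apps (Fterm_red f) (map encode os)) (lbot g)) /\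
  (forall vs, all_some os = Some vs -> ~ rule_matches f vs -> exists j, iter bv j (apps (Fterm_red f) (map encode os)) (lbot g)) /\
  (forall vs r sg, all_some os = Some vs -> In r R -> rfun r = f -> (forall x, cterm (sg x)) -> map (tsubst sg) (rpats r) = vs ->
     exists j D' lev' vm', j <= far f + sel_cost * far f + sel_cost * pat_size_total /\
       iter bv j (apps (Fterm_red f) (map encode os)) (csubst 0 (rev lev') (code_term vm' D' (rrhs r))) /\
       code_inv sg (rrhs r) D' lev' vm').
Proof.
  intros Hf Hlo Hok. destruct (Fterm_red_forced f os Hf Hlo Hok) as [Hnone Hsome].
  assert (Htry : forall vs, all_some os = Some vs -> exists j ext, j <= far f + sel_cost * far f /\
    iter bv j (apps (Fterm_red f) (map encode os))
      (csubst 0 (rev (call_env os ++ ext)) (try_rules (rules_for f) f (h + far f + length ext))) /\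
    args_env f vs (h + far f + length ext) (call_env os ++ ext) /\ Forall cterm vs /\ length vs = far f).
  { intros vs E. destruct (Hsome vs E) as [j [ext [Hj [Hce Hit]]]]. exists j, ext.
    apply all_some_spec in E. subst os. rewrite length_map in Hlo.
    assert (Hvs : Forall cterm vs).
    { rewrite Forall_map in Hok. eapply Forall_impl; [|exact Hok]. intros a Ha. apply Ha; auto. }
    split; [auto|split; [auto|split; [|split; auto]]].
    apply args_env_ext; auto. apply call_env_args_env; auto. }
  split; [|split]; auto.
  - intros vs E Hnm. destruct (Htry vs E) as [j [ext [_ [Hit [Henv [Hvs Hlv]]]]]].
    destruct (try_rules_for_spec f vs _ _ Hf Hlv Hvs Henv) as [_ [j' Hit']]; auto.
    exists (j + j'). eapply iter_trans; eauto.
  - intros vs r sg E Hr Hrf Hsg Em. destruct (Htry vs E) as [j [ext [Hj [Hit [Henv [Hvs Hlv]]]]]].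
    destruct (try_rules_for_spec f vs _ _ Hf Hlv Hvs Henv) as [T1 _].
    destruct (T1 r sg Hr Hrf Hsg Em) as [j' [D' [lev' [vm' [Hj' [Hit' Hinv]]]]]].
    exists (j + j'), D', lev', vm'. split; [lia|split; auto]. eapply iter_trans; eauto.
Qed.

(** * Simulation *)

Fixpoint con_count (t : term) : nat :=
  match t with Var _ => 0 | Con _ ts => S (list_sum (map con_count ts)) | Fun _ ts => list_sum (map con_count ts) end.

Definition far_total := sum_below far h.
Definition rhs_con_total := list_sum (map (fun r => con_count (rrhs r)) R).
(* Per rewrite step: unfold [F_f], force the arguments, try the rules of [f], plus the
   strict constructor calls of the right-hand side. *)
Definition sim_cost := h + far_total + sel_cost * far_total + sel_cost * pat_size_total + con_cost * rhs_con_total.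

Lemma outcome_wf_eval :
  (forall s t o n, eval s t o n -> (forall x, cterm (s x)) -> is_term g h car far t -> outcome_wf o) /\
  (forall s ts os n, evals s ts os n -> (forall x, cterm (s x)) -> Forall (is_term g h car far) ts -> Forall outcome_wf os).
Proof.
  split.
  - intros s t o n HE Hs Ht. destruct (proj1 eval_sound s t o n HE Hs Ht) as [w [_ Hr]].
    intros v ->. destruct Hr; auto.
  - intros s ts os n HE Hs Ht. destruct (proj2 eval_sound s ts os n HE Hs Ht) as [ws [_ HF]].
    clear -HF. induction HF; constructor; auto. intros v ->. destruct H; auto.
Qed.

Definition sim_term s t o n := forall D lev vm, code_inv s t D lev vm ->
  exists j, iter bv j (csubst 0 (rev lev) (code_term vm D t)) (encode o) /\
    (o <> None -> j <= sim_cost * n + con_cost * con_count t).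

Definition sim_args s ts os n := forall D lev vm X X' j0, (forall t, In t ts -> code_inv s t D lev vm) ->
  iter bv j0 X X' ->
  exists j, iter bv j (apps X (map (fun t => csubst 0 (rev lev) (code_term vm D t)) ts)) (apps X' (map encode os)) /\
    j0 <= j /\ (all_some os <> None -> j <= j0 + sim_cost * n + con_cost * list_sum (map con_count ts)).

Lemma sim_call s f ts os n D lev vm : evals s ts os n -> sim_args s ts os n -> code_inv s (Fun f ts) D lev vm ->
  f < h /\ length os = far f /\ Forall outcome_wf os /\
  exists j, h <= j /\ iter bv j (csubst 0 (rev lev) (code_term vm D (Fun f ts))) (apps (Fterm_red f) (map encode os)) /\
    (all_some os <> None -> j <= h + sim_cost * n + con_cost * list_sum (map con_count ts)).
Proof.
  intros HEs IH Hinv. pose proof Hinv as [Hs [Ht [HD [Hh [HA _]]]]].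
  apply term_fun in Ht. destruct Ht as [Hf [Hl Ht]].
  split; [auto|split; [apply evals_length in HEs; congruence|split; [exact (proj2 outcome_wf_eval _ _ _ _ HEs Hs Ht)|]]].
  rewrite csubst_code_term_fun by auto.
  destruct (IH D lev vm (Fterm f) (Fterm_red f) h ltac:(intros; apply (code_inv_sub s f ts); auto) (Fterm_reduces f Hf))
    as [j [Hit [Hle Hj]]].
  exists j. auto.
Qed.

Lemma simulation :
  (forall s t o n, eval s t o n -> sim_term s t o n) /\ (forall s ts os n, evals s ts os n -> sim_args s ts os n).
Proof.
  apply eval_evals_mut.
  - intros s x D lev vm Hinv. destruct Hinv as [_ [_ [HD [_ [_ [_ [Hvm Hb]]]]]]].
    exists 0. split; [|intros; lia]. cbn [code_term]. rewrite csubst_lvar by auto. rewrite Hb by (simpl; auto). constructor.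
  - intros s i ts os n HEs IH D lev vm Hinv.
    pose proof Hinv as [Hs [Ht [HD _]]].
    apply term_con in Ht. destruct Ht as [Hi [Hl Ht]].
    rewrite csubst_code_term_con.
    destruct (IH D lev vm (con_code i) (con_code i) 0 ltac:(intros; apply (code_inv_sub s i ts); auto) ltac:(constructor))
      as [j [Hit [_ Hj]]].
    destruct (con_code_spec i os Hi ltac:(apply evals_length in HEs; congruence) (proj2 outcome_wf_eval _ _ _ _ HEs Hs Ht))
      as [j' [Hit' Hj']].
    exists (j + j'). split. eapply iter_trans; eauto.
    intros Hne. destruct (all_some os) eqn:E1; [|simpl in Hne; congruence].
    specialize (Hj ltac:(congruence)). specialize (Hj' ltac:(congruence)).
    simpl con_count. nia.
  - intros s f ts os n HEs IH E1 D lev vm Hinv.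
    destruct (sim_call s f ts os n D lev vm HEs IH Hinv) as [Hf [Hlo [Hok [j [_ [Hit _]]]]]].
    destruct (Fterm_red_spec f os Hf Hlo Hok) as [C1 _].
    destruct (C1 E1) as [j' Hit']. exists (j + j'). split. eapply iter_trans; eauto. congruence.
  - intros s f ts os vs n HEs IH E1 Hnm D lev vm Hinv.
    destruct (sim_call s f ts os n D lev vm HEs IH Hinv) as [Hf [Hlo [Hok [j [_ [Hit _]]]]]].
    destruct (Fterm_red_spec f os Hf Hlo Hok) as [_ [C2 _]].
    destruct (C2 vs E1 Hnm) as [j' Hit']. exists (j + j'). split. eapply iter_trans; eauto. congruence.
  - intros s f ts os vs n r sg o m HEs IH E1 Hr Hrf Hsg Em HE IHE D lev vm Hinv.
    destruct (sim_call s f ts os n D lev vm HEs IH Hinv) as [Hf [Hlo [Hok [j [_ [Hit Hj]]]]]].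
    destruct (Fterm_red_spec f os Hf Hlo Hok) as [_ [_ C3]].
    destruct (C3 vs r sg E1 Hr Hrf Hsg Em) as [j' [D' [lev' [vm' [Hj' [Hit' Hinv']]]]]].
    destruct (IHE D' lev' vm' Hinv') as [j'' [Hit'' Hj'']].
    exists (j + j' + j''). split. eapply iter_trans. eapply iter_trans. exact Hit. exact Hit'. exact Hit''.
    intros Hne. specialize (Hj ltac:(congruence)). specialize (Hj'' Hne).
    assert (far f <= far_total) by (apply sum_below_le; auto).
    assert (con_count (rrhs r) <= rhs_con_total) by (apply (list_sum_map_In_le (fun r => con_count (rrhs r))); auto).
    simpl con_count. unfold sim_cost in *. nia.
  - intros s D lev vm X X' j0 _ Hit. exists j0. simpl. repeat split; auto; lia.
  - intros s t ts o os n m HE IH HEs IHs D lev vm X X' j0 Hinv Hit.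
    destruct (IH D lev vm (Hinv t (or_introl eq_refl))) as [j1 [Hit1 Hj1]].
    destruct (IHs D lev vm (App X (csubst 0 (rev lev) (code_term vm D t))) (App X' (encode o)) (j0 + j1)
                ltac:(intros; apply Hinv; right; auto)) as [j [Hit2 [Hle Hj]]].
    { eapply iter_trans. apply iter_appl. exact Hit. apply iter_appr. exact Hit1. }
    exists j. split; [exact Hit2|split; [lia|]].
    intros Hne. simpl in Hne. destruct o; [|congruence]. destruct (all_some os) eqn:E1; [|congruence].
    specialize (Hj ltac:(congruence)). specialize (Hj1 ltac:(congruence)). simpl. nia.
Qed.

Definition nonterm_code (M : lterm) := exists K s t D lev vm,
  M = plug K (csubst 0 (rev lev) (code_term vm D t)) /\ code_inv s t D lev vm /\ ~ evaluates s t.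

Lemma evals_or_stuck_arg s ts :
  (exists os n, evals s ts os n) \/ exists pre t post, ts = pre ++ t :: post /\ ~ evaluates s t.
Proof.
  destruct (classic (exists t, In t ts /\ ~ evaluates s t)) as [[t [Hin Ht]]|Hn].
  - right. destruct (in_split _ _ Hin) as [pre [post ->]]. eauto.
  - left. apply evals_exists. rewrite Forall_forall. intros t Hin.
    apply NNPP. intro C. apply Hn. exists t; split; auto.
Qed.

Lemma progress_in_arg (P : lterm -> Prop) X (F : term -> lterm) pre t post K :
  (forall K', exists M' k, iter bv (S k) (plug K' (F t)) M' /\ P M') ->
  exists M' k, iter bv (S k) (plug K (apps X (map F (pre ++ t :: post)))) M' /\ P M'.
Proof. intro H. rewrite map_app. simpl. rewrite apps_split, <- plug_app. apply H. Qed.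

Lemma nonterm_code_step : forall t K s D lev vm, code_inv s t D lev vm -> ~ evaluates s t ->
  exists M' k, iter bv (S k) (plug K (csubst 0 (rev lev) (code_term vm D t))) M' /\ nonterm_code M'.
Proof.
  intro t; induction t using term_ind'; intros K s D lev vm Hinv Hnt.
  - exfalso. apply Hnt. exists (Some (s x)), 0. constructor.
  - destruct (evals_or_stuck_arg s ts) as [[os [n HEs]]|[pre [t [post [-> Ht]]]]].
    { exfalso. apply Hnt. eexists; eexists. constructor; eauto. }
    rewrite csubst_code_term_con. apply progress_in_arg. intro K'.
    rewrite Forall_forall in H. apply (H t (in_elt _ _ _) K' s D lev vm); auto.
    apply (code_inv_sub s i (pre ++ t :: post)); auto using in_elt.
  - pose proof Hinv as [Hs [Ht [HD [Hh [HA _]]]]].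
    apply term_fun in Ht. destruct Ht as [Hf [Hl Ht]].
    destruct (evals_or_stuck_arg s ts) as [[os [n HEs]]|[pre [t [post [-> Ht']]]]].
    2:{ rewrite csubst_code_term_fun by auto. apply progress_in_arg. intro K'.
        rewrite Forall_forall in H. apply (H t (in_elt _ _ _) K' s D lev vm); auto.
        apply (code_inv_sub s i (pre ++ t :: post)); auto using in_elt. }
    destruct (all_some os) as [vs|] eqn:E1.
    2:{ exfalso. apply Hnt. eexists; eexists. eapply eval_arg_err; eauto. }
    destruct (classic (rule_matches i vs)) as [[r [sg [Hr [Hrf [Hsg Em]]]]]|Hnm].
    2:{ exfalso. apply Hnt. eexists; eexists. eapply eval_no_match; eauto. }
    assert (Hnr : ~ evaluates sg (rrhs r)).
    { intros [o [m HE]]. apply Hnt. eexists; eexists. eapply eval_rule; eauto. }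
    destruct (sim_call s i ts os n D lev vm HEs (proj2 simulation _ _ _ _ HEs) Hinv)
      as [_ [Hlo [Hok [j [Hhj [Hit _]]]]]].
    destruct (Fterm_red_spec i os Hf Hlo Hok) as [_ [_ C3]].
    destruct (C3 vs r sg E1 Hr Hrf Hsg Em) as [j' [D' [lev' [vm' [_ [Hit' Hinv']]]]]].
    exists (plug K (csubst 0 (rev lev') (code_term vm' D' (rrhs r)))), (j + j' - 1). split.
    + replace (S (j + j' - 1)) with (j + j') by lia. apply iter_plug. eapply iter_trans; eauto.
    + exists K, sg, (rrhs r), D', lev', vm'. auto.
Qed.

Lemma nonterm_code_diverges M : nonterm_code M -> diverges bv M.
Proof.
  apply (diverges_of_progress bv). intros M0 [K [s [t [D [lev [vm [-> [Hinv Hnt]]]]]]]].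
  eapply nonterm_code_step; eauto.
Qed.

Lemma vars_map_Var : forall l, flat_map vars (map Var l) = l.
Proof. induction l; simpl; f_equal; auto. Qed.

Lemma con_count_vars : forall l, list_sum (map con_count (map Var l)) = 0.
Proof. induction l; simpl; auto. Qed.

(* The call [f ts] is the instance of [f(x_0, ..., x_{far f - 1})] by [x_k := ts_k]. *)
Lemma call_config f ts : f < h -> length ts = far f -> Forall cterm ts ->
  exists s t D lev vm, code_inv s t D lev vm /\ tsubst s t = Fun f ts /\ con_count t = 0 /\
    csubst 0 (rev lev) (code_term vm D t) = apps (Fterm f) (map (scott g) ts).
Proof.
  intros Hf Hl Hts.
  pose proof (call_env_args_env f ts Hl Hts) as [HD [Hc [HA [_ Hargs]]]].
  set (s := fun x => nth x ts c0).
  set (vm := fun x => if x <? far f then h + x else 0).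
  assert (Hvm : forall k, k < far f -> vm k = h + k).
  { intros k Hk. unfold vm. replace (k <? far f) with true by (symmetry; apply Nat.ltb_lt; lia). auto. }
  assert (Hnth : forall k, k < far f -> nth (h + k) (call_env (map Some ts)) lid = scott g (s k)).
  { intros k Hk. rewrite Hargs by auto. unfold s. f_equal. apply nth_indep. lia. }
  exists s, (Fun f (map Var (seq 0 (far f)))), (h + far f), (call_env (map Some ts)), vm.
  split; [|split; [|split]].
  - unfold code_inv. repeat match goal with |- _ /\ _ => split end; auto; try lia.
    + intro x. unfold s. destruct (Nat.lt_ge_cases x (length ts)).
      * rewrite Forall_forall in Hts. apply Hts, nth_In; auto.
      * rewrite nth_overflow; auto.
    + apply term_fun. repeat split; auto. rewrite length_map, length_seq; auto.
      rewrite Forall_map, Forall_forall. intros; simpl; auto.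
    + intro y. unfold vm. destruct (y <? far f) eqn:E; [apply Nat.ltb_lt in E|]; lia.
    + intros y Hy. simpl in Hy. rewrite vars_map_Var in Hy. apply in_seq in Hy.
      rewrite Hvm by lia. apply Hnth. lia.
  - simpl. f_equal. rewrite map_map. simpl. rewrite <- Hl. apply map_nth_seq_length.
  - simpl. apply con_count_vars.
  - rewrite csubst_code_term_fun by (auto; lia). f_equal. rewrite map_map.
    transitivity (map (fun k => scott g (s k)) (seq 0 (far f))).
    + apply map_ext_in. intros k Hk. apply in_seq in Hk. cbn [code_term].
      rewrite Hvm, csubst_lvar by lia. apply Hnth. lia.
    + rewrite <- (map_map s (scott g)). f_equal. unfold s. rewrite <- Hl. apply map_nth_seq_length.
Qed.

Lemma compiles_to_Fterm : compiles_to Fterm sim_cost.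
Proof.
  intros f ts Hf Hl Hts.
  destruct (call_config f ts Hf Hl Hts) as [s [t [D [lev [vm [Hinv [Hst [Hcc Hcode]]]]]]]].
  pose proof Hinv as [Hs [Ht _]].
  rewrite <- Hst, <- Hcode. split; [|split].
  - intros v n Hv Hi. destruct (eval_of_nf s t n v Hs Ht Hi (cterm_rnormal v Hv)) as [[v'|] [HE Hr]].
    2:{ destruct Hr; contradiction. }
    destruct Hr as [-> _].
    destruct (proj1 simulation _ _ _ _ HE D lev vm Hinv) as [j [Hit Hj]].
    exists j. split; auto. specialize (Hj ltac:(congruence)). lia.
  - intros v [n Hi] Hn Hnc. destruct (eval_of_nf s t n v Hs Ht Hi Hn) as [[v'|] [HE Hr]].
    { destruct Hr as [-> Hc]; contradiction. }
    destruct (proj1 simulation _ _ _ _ HE D lev vm Hinv) as [j [Hit _]]. exists j. exact Hit.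
  - intros Hdiv. apply nonterm_code_diverges. exists [], s, t, D, lev, vm.
    split; [reflexivity|split; [exact Hinv|]]. apply diverges_not_evaluates; auto.
Qed.
End DefaultConstructorTerm.

(* Rewrite steps need total constructor substitutions: without constructor terms no rule
   ever fires, and [lbot] is a correct translation. *)
Lemma compiles_to_lbot : (~ exists c, cterm c) -> compiles_to (fun _ => lbot g) 0.
Proof.
  intros Hnoc f ts Hf Hl Hts.
  assert (ts = []) as ->.
  { destruct ts as [|t ts]; auto. exfalso. inversion Hts; subst. apply Hnoc; eauto. }
  split; [|split].
  - intros v n Hv. exfalso; eauto.
  - intros. exists 0. simpl. constructor.
  - intros [sq [H0 Hs]]. exfalso. specialize (Hs 0). rewrite H0 in Hs.
    apply rstep_fun_inv in Hs.
    destruct Hs as [[r [s [_ [Hs _]]]]|[l1 [a [l2 [a' [E _]]]]]].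
    + apply Hnoc. exists (s 0). auto.
    + destruct l1; discriminate.
Qed.
End TRS.

Theorem theorem2 (g h : nat) (car far : nat -> nat) (R : list rule) :
  orthogonal_crs g h car far R ->
  exists (F : nat -> lterm) (k : nat),
    forall (f : nat) (ts : list term),
      f < h -> length ts = far f -> Forall (is_cterm g car) ts ->
      (forall (v : term) (n : nat),
          is_cterm g car v -> iter (rstep g car R) n (Fun f ts) v ->
          exists j, j <= k * n /\
            iter bv j (apps (F f) (map (scott g) ts)) (scott g v)) /\
      (forall v : term,
          star (rstep g car R) (Fun f ts) v -> rnormal g car R v -> ~ is_cterm g car v ->
          star bv (apps (F f) (map (scott g) ts)) (lbot g)) /\
      (diverges (rstep g car R) (Fun f ts) ->
          diverges bv (apps (F f) (map (scott g) ts))).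
Proof.
  intros HR. destruct (classic (exists c, is_cterm g car c)) as [[c0 Hc0]|Hnoc].
  - eexists; eexists. exact (compiles_to_Fterm g h car far R HR c0 Hc0).
  - eexists; eexists. exact (compiles_to_lbot g h car far R Hnoc).
Qed.
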